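(* For all configurations $C, C'$ of the NFB machine, $C \approx C'$ (machine bisimilarity) if and only if $[\![C]\!] \approx_H [\![C']\!]$ (HOcore barbed equivalence with respect to the set $H = \{c, hd, b, k, init, rec, ch\}$ of hidden names).
   Context: HOcore: processes $P,Q ::= a(x).P \mid \overline{a}\langle P\rangle \mid P \parallel Q \mid x \mid 0$ ($a$ channel names, $x$ process variables, $a(x).P$ binds $x$, $a(\_).P$ when $x$ is unused, $\parallel$ associative and commutative with unit $0$, $\mathrm{fn}(P)$ the free names). LTS: $\overline{a}\langle P\rangle \xrightarrow{\overline{a}\langle P\rangle} 0$; $a(x).Q \xrightarrow{a(P)} Q\{P/x\}$; if $P \xrightarrow{l} P'$ then $P\parallel Q \xrightarrow{l} P'\parallel Q$ (and symmetrically); if $P \xrightarrow{\overline{a}\langle R\rangle} P'$ and $Q \xrightarrow{a(R)} Q'$ then $P \parallel Q \xrightarrow{\tau} P'\parallel Q'$ (and symmetrically). $\Rightarrow$ is the reflexive transitive closure of $\xrightarrow{\tau}$. For a finite set $H$: $P\downarrow^H_a$ (resp. $P\downarrow^H_{\overline a}$) if $a\notin H$ and $P\xrightarrow{a(Q)}R$ (resp. $P\xrightarrow{\overline a\langle Q\rangle}R$) for some $Q,R$; $P\Downarrow^H_\mu$ if $P\Rightarrow P'\downarrow^H_\mu$. A barbed bisimulation w.r.t. $H$ is a symmetric relation $\mathcal R$ such that $P\mathcal RQ$ implies: $P\downarrow^H_\mu$ implies $Q\Downarrow^H_\mu$; for all $R$ with $\mathrm{fn}(R)\cap H=\emptyset$,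 $(P\parallel R)\mathcal R(Q\parallel R)$; if $P\xrightarrow\tau P'$ then $Q\Rightarrow Q'$ with $P'\mathcal RQ'$. $\approx_H$ is the largest barbed bisimulation w.r.t. $H$. Terms: $t,s ::= f \mid x \mid \lambda x.t \mid t\,s$ ($f$ free variables identified with natural numbers, $x$ bound variables, terms well formed). Stacks $\pi ::= t::\pi\mid[]$. NFB machine: configurations $\langle t,\pi,n\rangle_{\mathrm{ev}}$ and $\langle \pi, n\rangle_{\mathrm{cont}}$; transitions: $\langle t\,s,\pi,n\rangle_{\mathrm{ev}} \xrightarrow{\tau} \langle t, s::\pi, n\rangle_{\mathrm{ev}}$; $\langle \lambda x.t, s::\pi, n\rangle_{\mathrm{ev}} \xrightarrow{\tau} \langle t\{s/x\},\pi,n\rangle_{\mathrm{ev}}$; $\langle \lambda x.t, [], n\rangle_{\mathrm{ev}} \xrightarrow{\lambda} \langle t\{n/x\}, [], n+1\rangle_{\mathrm{ev}}$; $\langle f, \pi, n\rangle_{\mathrm{ev}} \xrightarrow{f} \langle \pi, n\rangle_{\mathrm{cont}}$; $\langle [], n\rangle_{\mathrm{cont}} \xrightarrow{\mathsf{done}}$ (terminating); $\langle t::\pi, n\rangle_{\mathrm{cont}} \xrightarrow{\mathsf{enter}} \langle t, [], n\rangle_{\mathrm{ev}}$; $\langle t::\pi, n\rangle_{\mathrm{cont}} \xrightarrow{\mathsf{skip}} \langle \pi, n\rangle_{\mathrm{cont}}$. Machine bisimulation: symmetric $\mathcal R$ such that $C_1\mathcal RC_2$ implies for every flag $F$: if $C_1\xrightarrow\tau^*\xrightarrow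 F C_1'$ then $C_2\xrightarrow\tau^*\xrightarrow F C_2'$ with $C_1'\mathcal RC_2'$; if $C_1\xrightarrow\tau^*\xrightarrow F$ (terminating) then $C_2\xrightarrow\tau^*\xrightarrow F$ (terminating). $\approx$ is the largest machine bisimulation. Translation into HOcore, using channel names $c, hd, b, k, init, rec, ch$ and flag names $\lambda, \mathsf{enter}, \mathsf{skip}, \mathsf{done}, suc, z$ (bound $\lambda$-variables become process variables; $p$ is a fresh variable). Internal choice: $P + Q = \overline{ch}\langle P\rangle \parallel \overline{ch}\langle Q\rangle \parallel ch(x).ch(\_).x$. Numbers: $[0] = z(\_).\overline{init}\langle 0\rangle$, $[n+1] = suc(\_).[n]$. $[\![t\,s]\!] = c(p).([\![t]\!] \parallel \overline{c}\langle \overline{hd}\langle[\![s]\!]\rangle \parallel \overline{c}\langle p\rangle\rangle)$; $[\![\lambda x.t]\!] = c(p).(p \parallel \overline{b}\langle \mathit{Restart}\rangle \parallel hd(x).b(\_).[\![t]\!])$; $[\![x]\!] = x$; $[\![f]\!] = [f]$; $\mathit{Restart} = \lambda(\_).k(x).(\overline{hd}\langle x\rangle \parallel \overline{k}\langle suc(\_).x\rangle \parallel \overline{c}\langle[\![[]]\!]\rangle \parallel \overline{b}\langle 0\rangle)$; $\mathit{Rec} = init(\_).rec(x).(x \parallel \overline{rec}\langle x\rangle \parallel \mathit{Cont})$; $\mathit{Cont} = c(p).(p \parallel \overline{b}\langle \mathsf{done}(\_).0\rangle \parallel hd(x).b(\_).\mathit{Choice}(x))$; $\mathit{Choice}(P)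 = \mathsf{enter}(\_).c(\_).(P \parallel \overline{c}\langle[\![[]]\!]\rangle) + \mathsf{skip}(\_).\overline{init}\langle 0\rangle$; $[\![[]]\!] = b(x).x$; $[\![t::\pi]\!] = \overline{hd}\langle[\![t]\!]\rangle \parallel \overline{c}\langle[\![\pi]\!]\rangle$; $[\![\langle t,\pi,n\rangle_{\mathrm{ev}}]\!] = [\![t]\!] \parallel \overline{c}\langle[\![\pi]\!]\rangle \parallel \overline{k}\langle [n]\rangle \parallel \mathit{Rec} \parallel \overline{rec}\langle\mathit{Rec}\rangle$; $[\![\langle \pi,n\rangle_{\mathrm{cont}}]\!] = \overline{c}\langle[\![\pi]\!]\rangle \parallel \overline{k}\langle [n]\rangle \parallel \mathit{Cont} \parallel \mathit{Rec} \parallel \overline{rec}\langle\mathit{Rec}\rangle$. *)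

(* HOcore, the NFB machine, and the translation of the
   machine into HOcore. Binders are represented with de Bruijn indices
   (HOcore process variables) and locally nameless terms (lambda terms). *)
From Stdlib Require Import List Arith.
Import ListNotations.

Inductive name : Type :=
  | Nc | Nhd | Nb | Nk | Ninit | Nrec | Nch
  | Nlam | Nenter | Nskip | Ndone | Nsuc | Nz       (* flag names *)
  | Nother (i : nat).

Definition name_eq_dec (a b : name) : {a = b} + {a <> b}.
Proof. decide equality; apply Nat.eq_dec. Defined.

(* Processes: a(x).P binds de Bruijn index 0 in P. *)
Inductive proc : Type :=
  | PNil : proc
  | PVar : nat -> proc
  | PIn  : name -> proc -> proc
  | POut : name -> proc -> proc
  | PPar : proc -> proc -> proc.

Definition up_ren (r : nat -> nat) (i : nat) : nat :=
  match i with 0 => 0 | S j => S (r j) end.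

Fixpoint rename (r : nat -> nat) (P : proc) : proc :=
  match P with
  | PNil => PNil
  | PVar i => PVar (r i)
  | PIn a Q => PIn a (rename (up_ren r) Q)
  | POut a Q => POut a (rename r Q)
  | PPar Q1 Q2 => PPar (rename r Q1) (rename r Q2)
  end.

Definition lift (k : nat) (P : proc) : proc := rename (fun i => i + k) P.

Fixpoint subst_rec (k : nat) (R : proc) (Q : proc) : proc :=
  match Q with
  | PNil => PNil
  | PVar i =>
      if Nat.eq_dec i k then lift k R
      else if Nat.ltb k i then PVar (pred i) else PVar i
  | PIn a Q' => PIn a (subst_rec (S k) R Q')
  | POut a Q' => POut a (subst_rec k R Q')
  | PPar Q1 Q2 => PPar (subst_rec k R Q1) (subst_rec k R Q2)
  end.

(* Q{R/x} where x is the variable bound by the input prefix *)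
Definition subst (Q R : proc) : proc := subst_rec 0 R Q.

Fixpoint fn (P : proc) : list name :=
  match P with
  | PNil => []
  | PVar _ => []
  | PIn a Q => a :: fn Q
  | POut a Q => a :: fn Q
  | PPar Q1 Q2 => fn Q1 ++ fn Q2
  end.

Inductive label : Type :=
  | LIn  : name -> proc -> label
  | LOut : name -> proc -> label
  | LTau : label.

Inductive lts : proc -> label -> proc -> Prop :=
  | lts_out : forall a P, lts (POut a P) (LOut a P) PNil
  | lts_in : forall a Q P, lts (PIn a Q) (LIn a P) (subst Q P)
  | lts_parL : forall P Q l P', lts P l P' -> lts (PPar P Q) l (PPar P' Q)
  | lts_parR : forall P Q l Q', lts Q l Q' -> lts (PPar P Q) l (PPar P Q')
  | lts_commL : forall P Q a R P' Q',
      lts P (LOut a R) P' -> lts Q (LIn a R) Q' -> lts (PPar P Q) LTau (PPar P' Q')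
  | lts_commR : forall P Q a R P' Q',
      lts P (LIn a R) P' -> lts Q (LOut a R) Q' -> lts (PPar P Q) LTau (PPar P' Q').

Inductive taus : proc -> proc -> Prop :=
  | taus_refl : forall P, taus P P
  | taus_step : forall P P' P'', lts P LTau P' -> taus P' P'' -> taus P P''.

Inductive barb : Type := BIn (a : name) | BOut (a : name).

Definition has_barb (H : list name) (P : proc) (mu : barb) : Prop :=
  match mu with
  | BIn a => ~ In a H /\ exists Q R, lts P (LIn a Q) R
  | BOut a => ~ In a H /\ exists Q R, lts P (LOut a Q) R
  end.

Definition has_wbarb (H : list name) (P : proc) (mu : barb) : Prop :=
  exists P', taus P P' /\ has_barb H P' mu.

Definition barbed_bisimulation (H : list name) (Rel : proc -> proc -> Prop) : Prop :=
  (forall P Q, Rel P Q -> Rel Q P) /\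
  (forall P Q, Rel P Q ->
     (forall mu, has_barb H P mu -> has_wbarb H Q mu) /\
     (forall R, (forall a, In a (fn R) -> ~ In a H) -> Rel (PPar P R) (PPar Q R)) /\
     (forall P', lts P LTau P' -> exists Q', taus Q Q' /\ Rel P' Q')).

Definition barbed_equiv (H : list name) (P Q : proc) : Prop :=
  exists Rel, barbed_bisimulation H Rel /\ Rel P Q.

Inductive term : Type :=
  | TFree : nat -> term
  | TBound : nat -> term
  | TLam : term -> term          (* \x. t, binds index 0 *)
  | TApp : term -> term -> term.

Fixpoint wf_at (d : nat) (t : term) : Prop :=
  match t with
  | TFree _ => True
  | TBound i => i < d
  | TLam t' => wf_at (S d) t'
  | TApp t1 t2 => wf_at d t1 /\ wf_at d t2
  end.

Definition wf_term (t : term) : Prop := wf_at 0 t.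

Fixpoint open_rec (k : nat) (u : term) (t : term) : term :=
  match t with
  | TFree f => TFree f
  | TBound i => if Nat.eq_dec i k then u else TBound i
  | TLam t' => TLam (open_rec (S k) u t')
  | TApp t1 t2 => TApp (open_rec k u t1) (open_rec k u t2)
  end.

Definition open (t u : term) : term := open_rec 0 u t.

Definition stack := list term.

Inductive conf : Type :=
  | Ev : term -> stack -> nat -> conf
  | Co : stack -> nat -> conf.

Definition wf_conf (C : conf) : Prop :=
  match C with
  | Ev t pi _ => wf_term t /\ Forall wf_term pi
  | Co pi _ => Forall wf_term pi
  end.

Inductive flag : Type :=
  | FLam | FVar (f : nat) | FEnter | FSkip | FDone.

Inductive mtau : conf -> conf -> Prop :=
  | mtau_app : forall t s pi n, mtau (Ev (TApp t s) pi n) (Ev t (s :: pi) n)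
  | mtau_beta : forall t s pi n, mtau (Ev (TLam t) (s :: pi) n) (Ev (open t s) pi n).

Inductive mflag : conf -> flag -> conf -> Prop :=
  | mflag_lam : forall t n, mflag (Ev (TLam t) [] n) FLam (Ev (open t (TFree n)) [] (S n))
  | mflag_var : forall f pi n, mflag (Ev (TFree f) pi n) (FVar f) (Co pi n)
  | mflag_enter : forall t pi n, mflag (Co (t :: pi) n) FEnter (Ev t [] n)
  | mflag_skip : forall t pi n, mflag (Co (t :: pi) n) FSkip (Co pi n).

Inductive mterm : conf -> flag -> Prop :=
  | mterm_done : forall n, mterm (Co [] n) FDone.

Inductive mtaus : conf -> conf -> Prop :=
  | mtaus_refl : forall C, mtaus C C
  | mtaus_step : forall C C' C'', mtau C C' -> mtaus C' C'' -> mtaus C C''.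

Definition machine_bisimulation (Rel : conf -> conf -> Prop) : Prop :=
  (forall C1 C2, Rel C1 C2 -> Rel C2 C1) /\
  (forall C1 C2, Rel C1 C2 -> forall F,
     (forall C1m C1', mtaus C1 C1m -> mflag C1m F C1' ->
        exists C2m C2', mtaus C2 C2m /\ mflag C2m F C2' /\ Rel C1' C2') /\
     (forall C1m, mtaus C1 C1m -> mterm C1m F ->
        exists C2m, mtaus C2 C2m /\ mterm C2m F)).

Definition mbisimilar (C1 C2 : conf) : Prop :=
  exists Rel, machine_bisimulation Rel /\ Rel C1 C2.

(* P + Q = \bar ch<P> || \bar ch<Q> || ch(x).ch(_).x *)
Definition choice_plus (P Q : proc) : proc :=
  PPar (POut Nch P) (PPar (POut Nch Q) (PIn Nch (PIn Nch (PVar 1)))).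

Fixpoint tr_num (n : nat) : proc :=
  match n with
  | 0 => PIn Nz (POut Ninit PNil)
  | S m => PIn Nsuc (tr_num m)
  end.

Definition tr_nil : proc := PIn Nb (PVar 0).

(* Restart = lam(_).k(x).(\bar hd<x> || \bar k<suc(_).x> || \bar c<[[[]]]> || \bar b<0>) *)
Definition Restart : proc :=
  PIn Nlam (PIn Nk
    (PPar (POut Nhd (PVar 0))
    (PPar (POut Nk (PIn Nsuc (PVar 1)))
    (PPar (POut Nc tr_nil)
          (POut Nb PNil))))).

(* lambda variable 0 of the body becomes x (index 1 under hd(x).b(_)),
   the others are shifted past the three binders c(p), hd(x), b(_) *)
Definition lam_ren (i : nat) : nat :=
  match i with 0 => 1 | S j => j + 3 end.

(* Term translation; the lambda-bound variable with de Bruijn index i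
   becomes the process variable with de Bruijn index i (then adjusted
   under the extra HOcore binders). *)
Fixpoint tr_term (t : term) : proc :=
  match t with
  | TFree f => tr_num f
  | TBound i => PVar i
  | TApp t1 t2 =>
      (* c(p).([[t]] || \bar c< \bar hd<[[s]]> || \bar c<p> >) *)
      PIn Nc (PPar (lift 1 (tr_term t1))
                   (POut Nc (PPar (POut Nhd (lift 1 (tr_term t2)))
                                  (POut Nc (PVar 0)))))
  | TLam t' =>
      (* c(p).(p || \bar b<Restart> || hd(x).b(_).[[t]]) *)
      PIn Nc (PPar (PVar 0)
                   (PPar (POut Nb Restart)
                         (PIn Nhd (PIn Nb (rename lam_ren (tr_term t'))))))
  end.

(* Choice(P) = enter(_).c(_).(P || \bar c<[[[]]]>) + skip(_).\bar init<0> *)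
Definition Choice (P : proc) : proc :=
  choice_plus (PIn Nenter (PIn Nc (PPar (lift 2 P) (POut Nc tr_nil))))
              (PIn Nskip (POut Ninit PNil)).

(* Cont = c(p).(p || \bar b<done(_).0> || hd(x).b(_).Choice(x)) *)
Definition Cont : proc :=
  PIn Nc (PPar (PVar 0)
         (PPar (POut Nb (PIn Ndone PNil))
               (PIn Nhd (PIn Nb (Choice (PVar 1)))))).

(* Rec = init(_).rec(x).(x || \bar rec<x> || Cont) *)
Definition Rec : proc :=
  PIn Ninit (PIn Nrec (PPar (PVar 0) (PPar (POut Nrec (PVar 0)) Cont))).

Fixpoint tr_stack (pi : stack) : proc :=
  match pi with
  | [] => tr_nil
  | t :: pi' => PPar (POut Nhd (tr_term t)) (POut Nc (tr_stack pi'))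
  end.

Definition tr_conf (C : conf) : proc :=
  match C with
  | Ev t pi n =>
      PPar (tr_term t) (PPar (POut Nc (tr_stack pi))
        (PPar (POut Nk (tr_num n)) (PPar Rec (POut Nrec Rec))))
  | Co pi n =>
      PPar (POut Nc (tr_stack pi)) (PPar (POut Nk (tr_num n))
        (PPar Cont (PPar Rec (POut Nrec Rec))))
  end.

Definition Hhid : list name := [Nc; Nhd; Nb; Nk; Ninit; Nrec; Nch].

(* Up to permutation of parallel threads, every process reachable from the
   translation of a configuration is one of finitely many shapes of
   administrative states ([pstate]), and its HOcore steps are exactly the
   transitions between these shapes.  All outputs are on hidden names, so only
   silent steps and inputs on the flag names are observable.  Forgetting the
   administrative steps yields the machine itself as a labelled transition
   system ([mstate]), whose inputs are the flags; weak bisimulations transfer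
   along both correspondences, in both directions.

   Soundness: machine bisimilarity is a weak bisimulation on [mstate], hence on
   processes, and a weak bisimulation whose outputs are all hidden is closed
   under hidden-free parallel contexts, so it is a barbed bisimulation.
   Completeness: placing [\bar c<0>] in parallel and using that its output barb
   must be consumed on both sides shows that barbed-equivalent translations
   match each other's visible inputs; hence barbed equivalence is a weak
   bisimulation on [pstate] and on [mstate], which is machine bisimilarity since
   a committed [enter]/[skip] choice is never related to an uncommitted
   configuration. *)

From Stdlib Require Import List Arith Lia Permutation.
Import ListNotations.

(** * Scoping, renaming and substitution *)

Fixpoint closed_at (d : nat) (P : proc) : Prop :=
  match P with
  | PNil => True
  | PVar i => i < d
  | PIn _ Q => closed_at (S d) Q
  | POut _ Q => closed_at d Q
  | PPar Q1 Q2 => closed_at d Q1 /\ closed_at d Q2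
  end.

Lemma closed_at_mono P d d' : closed_at d P -> d <= d' -> closed_at d' P.
Proof.
  revert d d'; induction P; intros d d' Hc Hd; simpl in *; auto; try lia.
  - apply (IHP (S d)); auto; lia.
  - eauto.
  - split; [eapply IHP1 | eapply IHP2]; eauto; tauto.
Qed.

Lemma closed_at_rename P d d' r :
  closed_at d P -> (forall i, i < d -> r i < d') -> closed_at d' (rename r P).
Proof.
  revert d d' r; induction P; intros d d' r Hc Hr; simpl in *; auto.
  - apply (IHP (S d)); auto. intros [|i] Hi; simpl; [lia|]. specialize (Hr i). lia.
  - eauto.
  - split; [eapply IHP1 | eapply IHP2]; eauto; tauto.
Qed.

Lemma rename_closed_id P d r :
  closed_at d P -> (forall i, i < d -> r i = i) -> rename r P = P.
Proof.
  revert d r; induction P; intros d r Hc Hr; simpl in *; f_equal; auto.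
  - apply (IHP (S d)); auto. intros [|i] Hi; simpl; auto. rewrite Hr; auto; lia.
  - eauto.
  - destruct Hc; eauto.
  - destruct Hc; eauto.
Qed.

Lemma lift_closed P k : closed_at 0 P -> lift k P = P.
Proof. intros Hc. eapply rename_closed_id; eauto. intros; lia. Qed.

Lemma subst_rec_closed P d k U : closed_at d P -> d <= k -> subst_rec k U P = P.
Proof.
  revert d k; induction P; intros d k Hc Hd; simpl in *; f_equal; eauto.
  - destruct (Nat.eq_dec n k); [lia|]. destruct (Nat.ltb_spec k n); [lia | auto].
  - apply (IHP (S d)); auto; lia.
  - destruct Hc; eauto.
  - destruct Hc; eauto.
Qed.

Lemma subst_rec_closed0 P k U : closed_at 0 P -> subst_rec k U P = P.
Proof. intros; eapply subst_rec_closed; eauto; lia. Qed.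

(* [r] sends [k] to [k'] and is monotone across it; [r'] is the renaming [r]
   induces once variable [k] has been substituted away. *)
Lemma subst_rec_rename X U r r' k k' :
  closed_at 0 U -> r k = k' ->
  (forall i, i < k -> r i < k') -> (forall i, k < i -> k' < r i) ->
  (forall i, i < k -> r' i = r i) -> (forall i, k < i -> r' (pred i) = pred (r i)) ->
  subst_rec k' U (rename r X) = rename r' (subst_rec k U X).
Proof.
  revert U r r' k k'.
  induction X; intros U r r' k k' HU Hk Hlt Hgt Hlt' Hgt'; simpl; f_equal; eauto.
  - destruct (Nat.eq_dec n k) as [-> | Hne].
    + destruct (Nat.eq_dec (r k) k'); [|congruence].
      rewrite !lift_closed by auto. symmetry. eapply rename_closed_id; eauto. intros; lia.
    + destruct (Nat.ltb_spec k n) as [Hkn | Hnk].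
      * specialize (Hgt n Hkn). destruct (Nat.eq_dec (r n) k'); [lia|].
        destruct (Nat.ltb_spec k' (r n)); [|lia]. simpl. rewrite Hgt'; auto.
      * assert (Hn : n < k) by lia. specialize (Hlt n Hn).
        destruct (Nat.eq_dec (r n) k'); [lia|].
        destruct (Nat.ltb_spec k' (r n)); [lia|]. simpl. rewrite Hlt'; auto.
  - apply IHX; auto.
    + simpl. congruence.
    + intros [|i] Hi; simpl; [lia|]. specialize (Hlt i). lia.
    + intros [|i] Hi; simpl; [lia|]. specialize (Hgt i). lia.
    + intros [|i] Hi; simpl; auto. rewrite Hlt'; auto; lia.
    + intros [|[|j]] Hi; simpl; [lia | lia|].
      specialize (Hgt' (S j)). simpl in Hgt'. rewrite Hgt' by lia.
      assert (k' < r (S j)) by (apply Hgt; lia). destruct (r (S j)); simpl; lia.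
Qed.

Lemma subst_rec_lift1 X U k : closed_at 0 U ->
  subst_rec (S k) U (lift 1 X) = lift 1 (subst_rec k U X).
Proof.
  intros. apply subst_rec_rename; auto; intros; try lia.
  all: destruct i; simpl; lia.
Qed.

Lemma subst_rec_lam_ren X U k : closed_at 0 U ->
  subst_rec (S (S (S k))) U (rename lam_ren X) = rename lam_ren (subst_rec (S k) U X).
Proof.
  intros. apply subst_rec_rename; auto; intros; simpl; try lia.
  - destruct i; simpl; lia.
  - destruct i; simpl; lia.
  - destruct i as [|[|j]]; simpl; lia.
Qed.

Lemma subst_rec_lam_ren0 X U : closed_at 0 U ->
  subst_rec 1 U (rename lam_ren X) = rename (fun i => i + 2) (subst_rec 0 U X).
Proof.
  intros. apply subst_rec_rename; auto; intros; try lia.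
  - destruct i; simpl; lia.
  - destruct i as [|[|j]]; simpl; lia.
Qed.

Lemma wf_at_mono t d d' : wf_at d t -> d <= d' -> wf_at d' t.
Proof.
  revert d d'; induction t; intros d d' Hw Hd; simpl in *; auto; try lia.
  - apply (IHt (S d)); auto; lia.
  - destruct Hw; split; eauto.
Qed.

Lemma wf_at_open_rec t k u : wf_at (S k) t -> wf_term u -> wf_at k (open_rec k u t).
Proof.
  revert k; induction t; intros k Hw Hu; simpl in *; auto.
  - destruct (Nat.eq_dec n k); simpl; [eapply wf_at_mono; eauto; lia | lia].
  - destruct Hw; split; auto.
Qed.

Lemma wf_open t u : wf_at 1 t -> wf_term u -> wf_term (open t u).
Proof. apply wf_at_open_rec. Qed.

Lemma closed_tr_num n : closed_at 0 (tr_num n).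
Proof. induction n; simpl; auto. eapply closed_at_mono; eauto. Qed.

Lemma closed_Restart : closed_at 0 Restart.
Proof. simpl. repeat split; lia. Qed.

Lemma closed_tr_nil : closed_at 0 tr_nil.
Proof. simpl; lia. Qed.

Lemma closed_at_tr_term t d : wf_at d t -> closed_at d (tr_term t).
Proof.
  revert d; induction t; intros d Hw; simpl in *.
  - eapply closed_at_mono; [apply closed_tr_num | lia].
  - auto.
  - repeat split; try lia.
    eapply closed_at_rename; [apply IHt; eauto|]. intros [|i] Hi; simpl; lia.
  - destruct Hw. repeat split; try lia.
    + eapply closed_at_rename; [apply IHt1; eauto|]. intros; lia.
    + eapply closed_at_rename; [apply IHt2; eauto|]. intros; lia.
Qed.

Lemma closed_tr_term t : wf_term t -> closed_at 0 (tr_term t).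
Proof. apply closed_at_tr_term. Qed.

Lemma closed_tr_stack pi : Forall wf_term pi -> closed_at 0 (tr_stack pi).
Proof.
  induction 1; simpl; [lia|]. split; auto. apply closed_tr_term; auto.
Qed.

Lemma tr_term_open_rec t k u : wf_at (S k) t -> wf_term u ->
  tr_term (open_rec k u t) = subst_rec k (tr_term u) (tr_term t).
Proof.
  assert (Hu : forall u, wf_term u -> closed_at 0 (tr_term u)) by apply closed_tr_term.
  revert k; induction t; intros k Hw Hwu; simpl in *.
  - symmetry. apply subst_rec_closed0, closed_tr_num.
  - destruct (Nat.eq_dec n k) as [-> | Hne]; simpl.
    + rewrite lift_closed; auto.
    + destruct (Nat.ltb_spec k n); [lia | auto].
  - rewrite subst_rec_lam_ren, <- IHt by auto. reflexivity.
  - destruct Hw. rewrite !subst_rec_lift1, <- IHt1, <- IHt2 by auto. reflexivity.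
Qed.

(* What remains of a lambda body after [hd(x).b(_)] has received [[s]] and the
   argument of [b]. *)
Lemma tr_term_open t s V : wf_at 1 t -> wf_term s ->
  subst_rec 0 V (subst_rec 1 (tr_term s) (rename lam_ren (tr_term t))) = tr_term (open t s).
Proof.
  intros Ht Hs. rewrite subst_rec_lam_ren0 by (apply closed_tr_term; auto).
  unfold open. rewrite <- tr_term_open_rec by auto.
  assert (Hc : closed_at 0 (tr_term (open_rec 0 s t)))
    by (apply closed_tr_term, wf_open; auto).
  rewrite (rename_closed_id _ 0) by (auto; intros; lia). apply subst_rec_closed0; auto.
Qed.

Lemma tr_term_open_num t n V : wf_at 1 t ->
  subst_rec 0 V (subst_rec 1 (tr_num n) (rename lam_ren (tr_term t))) = tr_term (open t (TFree n)).
Proof. intros. apply (tr_term_open t (TFree n)); simpl; auto. exact I. Qed.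

Lemma subst_rec_lam_body t k U : wf_at 1 t ->
  subst_rec (S (S k)) U (rename lam_ren (tr_term t)) = rename lam_ren (tr_term t).
Proof.
  intros. apply (subst_rec_closed _ 2); [|lia].
  eapply closed_at_rename; [apply closed_at_tr_term; eauto|]. intros [|i] Hi; simpl; lia.
Qed.

(** * Processes as multisets of threads *)

Fixpoint threads (P : proc) : list proc :=
  match P with
  | PNil => []
  | PPar P1 P2 => threads P1 ++ threads P2
  | _ => [P]
  end.

Inductive pick {A} (x : A) : list A -> list A -> Prop :=
  | pick_here L : pick x (x :: L) L
  | pick_there y L L' : pick x L L' -> pick x (y :: L) (y :: L').

Section Pick.
Context {A : Type}.
Implicit Types (x : A) (L : list A).

Lemma pick_appl x L1 L1' L2 : pick x L1 L1' -> pick x (L1 ++ L2) (L1' ++ L2).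
Proof. induction 1; simpl; constructor; auto. Qed.

Lemma pick_appr x L1 L2 L2' : pick x L2 L2' -> pick x (L1 ++ L2) (L1 ++ L2').
Proof. induction L1; simpl; intros; auto. constructor; auto. Qed.

Lemma pick_app_inv x L1 L2 L : pick x (L1 ++ L2) L ->
  (exists L1', pick x L1 L1' /\ L = L1' ++ L2) \/
  (exists L2', pick x L2 L2' /\ L = L1 ++ L2').
Proof.
  revert L; induction L1 as [|y L1 IH]; simpl; intros L Hp; [right; eauto|].
  inversion Hp as [|? ? L' Hp']; subst.
  - left. exists L1. split; [constructor | auto].
  - destruct (IH _ Hp') as [(L1' & ? & ->) | (L2' & ? & ->)].
    + left. exists (y :: L1'). split; [constructor|]; auto.
    + right. eauto.
Qed.

Lemma pick_perm x L L' : pick x L L' -> Permutation L (x :: L').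
Proof.
  induction 1; auto. eapply perm_trans; [apply perm_skip; eauto | apply perm_swap].
Qed.

Lemma in_pick x L : In x L -> exists L', pick x L L'.
Proof.
  induction L as [|y L IH]; simpl; intros Hin; [tauto|]. destruct Hin as [-> | Hin].
  - eexists; constructor.
  - destruct (IH Hin) as [L' ?]. exists (y :: L'). constructor; auto.
Qed.

Lemma perm_pick L1 L2 x L1' : Permutation L1 L2 -> pick x L1 L1' ->
  exists L2', pick x L2 L2' /\ Permutation L1' L2'.
Proof.
  intros HP Hp. pose proof (pick_perm _ _ _ Hp) as H1.
  assert (Hin : In x L2).
  { eapply Permutation_in; [exact HP|]. eapply Permutation_in; [symmetry; exact H1 | left; auto]. }
  destruct (in_pick _ _ Hin) as [L2' Hp2]. exists L2'. split; auto.
  apply Permutation_cons_inv with x. rewrite <- H1, HP. apply pick_perm; auto.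
Qed.

Lemma perm_cons_pick x L R R' : pick x R R' -> Permutation L R' -> Permutation (x :: L) R.
Proof. intros Hp HL. rewrite (pick_perm _ _ _ Hp), HL. reflexivity. Qed.

End Pick.

Ltac invert_picks := repeat match goal with
  | H : pick _ [] _ |- _ => inversion H
  | H : pick _ (_ :: _) _ |- _ => inversion H; subst; clear H
  end.

Lemma lts_out_threads X a M X' : lts X (LOut a M) X' ->
  exists L, pick (POut a M) (threads X) L /\ Permutation (threads X') L.
Proof.
  remember (LOut a M) as l; induction 1; subst; try discriminate.
  - injection Heql as -> ->. exists []. split; [constructor | auto].
  - destruct IHlts as (L & ? & HP); auto. exists (L ++ threads Q). split.
    + apply pick_appl; auto.
    + simpl. rewrite HP. reflexivity.
  - destruct IHlts as (L & ? & HP); auto. exists (threads P ++ L). split.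
    + apply pick_appr; auto.
    + simpl. rewrite HP. reflexivity.
Qed.

Lemma lts_in_threads X a M X' : lts X (LIn a M) X' ->
  exists Q L, pick (PIn a Q) (threads X) L /\
              Permutation (threads X') (threads (subst Q M) ++ L).
Proof.
  remember (LIn a M) as l; induction 1; subst; try discriminate.
  - injection Heql as -> ->. exists Q, []. split; [constructor | rewrite app_nil_r; auto].
  - destruct IHlts as (Q0 & L & ? & HP); auto. exists Q0, (L ++ threads Q). split.
    + apply pick_appl; auto.
    + simpl. rewrite HP, app_assoc. reflexivity.
  - destruct IHlts as (Q0 & L & ? & HP); auto. exists Q0, (threads P ++ L). split.
    + apply pick_appr; auto.
    + simpl. rewrite HP, !app_assoc, (Permutation_app_comm (threads P)). reflexivity.
Qed.

Lemma lts_tau_threads X X' : lts X LTau X' ->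
  exists a M Q L1 L2, pick (POut a M) (threads X) L1 /\ pick (PIn a Q) L1 L2 /\
                      Permutation (threads X') (threads (subst Q M) ++ L2).
Proof.
  remember LTau as l; induction 1; subst; try discriminate.
  - destruct IHlts as (a & M & Q0 & L1 & L2 & ? & ? & HP); auto.
    exists a, M, Q0, (L1 ++ threads Q), (L2 ++ threads Q).
    repeat split; try apply pick_appl; auto. simpl. rewrite HP, app_assoc. reflexivity.
  - destruct IHlts as (a & M & Q0 & L1 & L2 & ? & ? & HP); auto.
    exists a, M, Q0, (threads P ++ L1), (threads P ++ L2).
    repeat split; try apply pick_appr; auto.
    simpl. rewrite HP, !app_assoc, (Permutation_app_comm (threads P)). reflexivity.
  - destruct (lts_out_threads _ _ _ _ H) as (L1 & ? & HP1).
    destruct (lts_in_threads _ _ _ _ H0) as (Q0 & L2 & ? & HP2).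
    exists a, R, Q0, (L1 ++ threads Q), (L1 ++ L2).
    repeat split; [apply pick_appl | apply pick_appr|]; auto.
    simpl. rewrite HP1, HP2, !app_assoc, (Permutation_app_comm L1). reflexivity.
  - destruct (lts_in_threads _ _ _ _ H) as (Q0 & L1 & ? & HP1).
    destruct (lts_out_threads _ _ _ _ H0) as (L2 & ? & HP2).
    exists a, R, Q0, (threads P ++ L2), (L1 ++ L2).
    repeat split; [apply pick_appr | apply pick_appl|]; auto.
    simpl. rewrite HP1, HP2, app_assoc. reflexivity.
Qed.

Lemma lts_of_pick_out X a M L : pick (POut a M) (threads X) L ->
  exists X', lts X (LOut a M) X' /\ Permutation (threads X') L.
Proof.
  revert L; induction X; simpl; intros L Hp; invert_picks.
  - exists PNil. split; [constructor | auto].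
  - apply pick_app_inv in Hp as [(L1 & H1 & ->) | (L2 & H2 & ->)].
    + destruct (IHX1 _ H1) as (X' & ? & HP). exists (PPar X' X2).
      split; [constructor; auto | simpl; rewrite HP; reflexivity].
    + destruct (IHX2 _ H2) as (X' & ? & HP). exists (PPar X1 X').
      split; [constructor; auto | simpl; rewrite HP; reflexivity].
Qed.

Lemma lts_of_pick_in X a Q L M : pick (PIn a Q) (threads X) L ->
  exists X', lts X (LIn a M) X' /\ Permutation (threads X') (threads (subst Q M) ++ L).
Proof.
  revert L; induction X; simpl; intros L Hp; invert_picks.
  - eexists. split; [constructor | rewrite app_nil_r; reflexivity].
  - apply pick_app_inv in Hp as [(L1 & H1 & ->) | (L2 & H2 & ->)].
    + destruct (IHX1 _ H1) as (X' & ? & HP). exists (PPar X' X2).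
      split; [constructor; auto | simpl; rewrite HP, app_assoc; reflexivity].
    + destruct (IHX2 _ H2) as (X' & ? & HP). exists (PPar X1 X').
      split; [constructor; auto|].
      simpl. rewrite HP, !app_assoc, (Permutation_app_comm (threads X1)). reflexivity.
Qed.

Lemma lts_of_pick_tau X a M Q L1 L2 :
  pick (POut a M) (threads X) L1 -> pick (PIn a Q) L1 L2 ->
  exists X', lts X LTau X' /\ Permutation (threads X') (threads (subst Q M) ++ L2).
Proof.
  revert L1 L2; induction X; simpl; intros L1 L2 Hout Hin; invert_picks.
  apply pick_app_inv in Hout as [(L1' & Ho & ->) | (L2' & Ho & ->)];
    apply pick_app_inv in Hin as [(L1'' & Hi & ->) | (L2'' & Hi & ->)].
  - destruct (IHX1 _ _ Ho Hi) as (X' & ? & HP). exists (PPar X' X2).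
    split; [constructor; auto | simpl; rewrite HP, app_assoc; reflexivity].
  - destruct (lts_of_pick_out _ _ _ _ Ho) as (X1' & ? & HP1).
    destruct (lts_of_pick_in _ _ _ _ M Hi) as (X2' & ? & HP2).
    exists (PPar X1' X2'). split; [econstructor; eauto|].
    simpl. rewrite HP1, HP2, !app_assoc, (Permutation_app_comm L1'). reflexivity.
  - destruct (lts_of_pick_out _ _ _ _ Ho) as (X2' & ? & HP2).
    destruct (lts_of_pick_in _ _ _ _ M Hi) as (X1' & ? & HP1).
    exists (PPar X1' X2'). split; [eapply lts_commR; eauto|].
    simpl. rewrite HP1, HP2, app_assoc. reflexivity.
  - destruct (IHX2 _ _ Ho Hi) as (X' & ? & HP). exists (PPar X1 X').
    split; [constructor; auto|].
    simpl. rewrite HP, !app_assoc, (Permutation_app_comm (threads X1)). reflexivity.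
Qed.

Definition hidden_free (R : proc) : Prop := forall a, In a (fn R) -> ~ In a Hhid.

Lemma fn_rename P r : fn (rename r P) = fn P.
Proof.
  revert r; induction P; intros; simpl; rewrite ?IHP, ?IHP1, ?IHP2; auto.
Qed.

Lemma fn_subst_rec Q k M b : In b (fn (subst_rec k M Q)) -> In b (fn Q) \/ In b (fn M).
Proof.
  revert k; induction Q; simpl; intros k Hb; auto.
  - destruct (Nat.eq_dec n k).
    + unfold lift in Hb; rewrite fn_rename in Hb; auto.
    + destruct (Nat.ltb k n); simpl in Hb; tauto.
  - destruct Hb as [|Hb]; auto. destruct (IHQ _ Hb); auto.
  - destruct Hb as [|Hb]; auto. destruct (IHQ _ Hb); auto.
  - apply in_app_or in Hb as [Hb | Hb];
      [destruct (IHQ1 _ Hb) | destruct (IHQ2 _ Hb)]; auto using in_or_app.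
Qed.

Lemma lts_fn P l P' : lts P l P' ->
  (forall b, In b (fn P') -> In b (fn P) \/ exists a M, l = LIn a M /\ In b (fn M)) /\
  match l with
  | LIn a _ => In a (fn P)
  | LOut a M => In a (fn P) /\ forall b, In b (fn M) -> In b (fn P)
  | LTau => True
  end.
Proof.
  induction 1; simpl.
  - split; [tauto | auto].
  - split; auto. intros b Hb. destruct (fn_subst_rec _ _ _ _ Hb); eauto 6.
  - destruct IHlts as [H1 H2]. split.
    + intros b Hb. apply in_app_or in Hb as [Hb | Hb]; auto using in_or_app.
      destruct (H1 _ Hb); auto using in_or_app.
    + destruct l; auto using in_or_app. destruct H2; split; auto using in_or_app.
  - destruct IHlts as [H1 H2]. split.
    + intros b Hb. apply in_app_or in Hb as [Hb | Hb]; auto using in_or_app.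
      destruct (H1 _ Hb); auto using in_or_app.
    + destruct l; auto using in_or_app. destruct H2; split; auto using in_or_app.
  - destruct IHlts1 as [H1 [H2 H3]]. destruct IHlts2 as [H4 H5]. split; auto.
    intros b Hb. left. apply in_app_or in Hb as [Hb | Hb].
    + destruct (H1 _ Hb) as [| (? & ? & ? & ?)]; [auto using in_or_app | discriminate].
    + destruct (H4 _ Hb) as [| (? & ? & E & ?)]; [auto using in_or_app|].
      injection E as -> ->. auto using in_or_app.
  - destruct IHlts1 as [H1 H2]. destruct IHlts2 as [H4 [H5 H6]]. split; auto.
    intros b Hb. left. apply in_app_or in Hb as [Hb | Hb].
    + destruct (H1 _ Hb) as [| (? & ? & E & ?)]; [auto using in_or_app|].
      injection E as -> ->. auto using in_or_app.
    + destruct (H4 _ Hb) as [| (? & ? & ? & ?)]; [auto using in_or_app | discriminate].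
Qed.

Lemma hidden_free_step R l R' : lts R l R' -> hidden_free R ->
  (forall a M, l = LIn a M -> hidden_free M) -> hidden_free R'.
Proof.
  intros Hl HR HM b Hb. destruct (proj1 (lts_fn _ _ _ Hl) _ Hb) as [| (a & M & E & ?)]; auto.
  eapply HM; eauto.
Qed.

Lemma lts_in_any_arg P a M P' M' : lts P (LIn a M) P' -> exists P'', lts P (LIn a M') P''.
Proof.
  remember (LIn a M) as l; induction 1; subst; try discriminate.
  - injection Heql as -> ->. eexists; constructor.
  - destruct IHlts as [? ?]; auto. eexists; apply lts_parL; eauto.
  - destruct IHlts as [? ?]; auto. eexists; apply lts_parR; eauto.
Qed.

Lemma lts_par_inv P R l P' : lts (PPar P R) l P' ->
  (exists P1, lts P l P1 /\ P' = PPar P1 R) \/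
  (exists R1, lts R l R1 /\ P' = PPar P R1) \/
  (exists a M P1 R1, l = LTau /\ lts P (LOut a M) P1 /\ lts R (LIn a M) R1 /\ P' = PPar P1 R1) \/
  (exists a M P1 R1, l = LTau /\ lts P (LIn a M) P1 /\ lts R (LOut a M) R1 /\ P' = PPar P1 R1).
Proof. inversion 1; subst; eauto 11. Qed.

(** * Weak transitions and weak bisimulations *)

(* Only silent steps and inputs on visible names are matched; outputs of the
   translated processes are all on hidden names. *)
Definition tau_or_vis_input (l : label) : Prop :=
  l = LTau \/ exists c M, l = LIn c M /\ ~ In c Hhid.

Section Weak.
Context {A : Type} (step : A -> label -> A -> Prop).

Inductive star : A -> A -> Prop :=
  | star_refl a : star a a
  | star_step a b c : step a LTau b -> star b c -> star a c.

Definition wstep (a : A) (l : label) (a' : A) : Prop :=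
  match l with
  | LTau => star a a'
  | _ => exists a1 a2, star a a1 /\ step a1 l a2 /\ star a2 a'
  end.

Lemma star_trans a b c : star a b -> star b c -> star a c.
Proof. induction 1; intros; auto. econstructor; eauto. Qed.

Lemma star_one a b : step a LTau b -> star a b.
Proof. intros; econstructor; eauto; constructor. Qed.

Lemma wstep_star_l a a1 l a' : star a a1 -> wstep a1 l a' -> wstep a l a'.
Proof.
  intros Hs Hw. destruct l; simpl in *; try (eapply star_trans; eauto; fail);
    destruct Hw as (x & y & ? & ? & ?); exists x, y; eauto using star_trans.
Qed.

Lemma wstep_star_r a a1 l a' : wstep a l a1 -> star a1 a' -> wstep a l a'.
Proof.
  intros Hw Hs. destruct l; simpl in *; try (eapply star_trans; eauto; fail);
    destruct Hw as (x & y & ? & ? & ?); exists x, y; eauto using star_trans.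
Qed.

Lemma step_wstep a l a' : step a l a' -> wstep a l a'.
Proof.
  intros. destruct l; simpl; [exists a, a' .. | apply star_one; auto];
    repeat split; auto; constructor.
Qed.

End Weak.

Arguments star {A}.
Arguments wstep {A}.

Definition weak_sim {A B} (stA : A -> label -> A -> Prop) (stB : B -> label -> B -> Prop)
  (G : A -> B -> Prop) : Prop :=
  forall a b l a', G a b -> stA a l a' -> tau_or_vis_input l ->
  exists b', wstep stB b l b' /\ G a' b'.

Definition weak_bisim {A} (step : A -> label -> A -> Prop) (R : A -> A -> Prop) : Prop :=
  (forall a b, R a b -> R b a) /\ weak_sim step step R.

Section WeakSim.
Context {A B : Type} (stA : A -> label -> A -> Prop) (stB : B -> label -> B -> Prop).
Context (G : A -> B -> Prop) (HG : weak_sim stA stB G).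

Lemma weak_sim_star a b a' : G a b -> star stA a a' -> exists b', star stB b b' /\ G a' b'.
Proof.
  intros HR Hs. revert b HR. induction Hs as [|a a1 a' Hst Hs IH]; intros b HR.
  - exists b; split; auto; constructor.
  - destruct (HG _ _ _ _ HR Hst) as (b1 & Hb1 & HR1); [left; auto|].
    destruct (IH _ HR1) as (b2 & ? & ?). exists b2; split; auto. eapply star_trans; eauto.
Qed.

Lemma weak_sim_wstep a b l a' : G a b -> wstep stA a l a' -> tau_or_vis_input l ->
  exists b', wstep stB b l b' /\ G a' b'.
Proof.
  intros HR Hw Hl. destruct l.
  - destruct Hw as (a1 & a2 & H1 & H2 & H3).
    destruct (weak_sim_star _ _ _ HR H1) as (b1 & Hb1 & R1).
    destruct (HG _ _ _ _ R1 H2 Hl) as (b2 & Hb2 & R2).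
    destruct (weak_sim_star _ _ _ R2 H3) as (b3 & Hb3 & R3).
    exists b3. split; auto. eapply wstep_star_r; [eapply wstep_star_l|]; eauto.
  - destruct Hl as [E | (? & ? & E & _)]; discriminate.
  - eapply weak_sim_star; eauto.
Qed.

End WeakSim.

Lemma weak_bisim_transfer {A B} (stA : A -> label -> A -> Prop) (stB : B -> label -> B -> Prop)
  (F : A -> B -> Prop) RB :
  weak_sim stA stB F -> weak_sim stB stA (fun b a => F a b) -> weak_bisim stB RB ->
  weak_bisim stA (fun a1 a2 => exists b1 b2, F a1 b1 /\ F a2 b2 /\ RB b1 b2).
Proof.
  intros F1 F2 [Hsym HRB]. split.
  - intros a1 a2 (b1 & b2 & H1 & H2 & H3). exists b2, b1. auto.
  - intros a1 a2 l a1' (b1 & b2 & H1 & H2 & H3) Hs Hl.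
    destruct (F1 _ _ _ _ H1 Hs Hl) as (b1' & Hw1 & HF1).
    destruct (weak_sim_wstep _ _ _ HRB _ _ _ _ H3 Hw1 Hl) as (b2' & Hw2 & HR2).
    destruct (weak_sim_wstep _ _ _ F2 _ _ _ _ H2 Hw2 Hl) as (a2' & ? & ?).
    exists a2'. split; auto. exists b1', b2'. auto.
Qed.

(** * Hidden-free parallel contexts *)

Lemma taus_iff_star P Q : taus P Q <-> star lts P Q.
Proof. split; induction 1; econstructor; eauto. Qed.

Lemma star_parL P P' R : star lts P P' -> star lts (PPar P R) (PPar P' R).
Proof. induction 1; econstructor; eauto. constructor; auto. Qed.

Lemma wstep_parL P l P' R : wstep lts P l P' -> wstep lts (PPar P R) l (PPar P' R).
Proof.
  intros Hw. destruct l; simpl in *; [..| apply star_parL; auto];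
    destruct Hw as (x & y & ? & ? & ?); exists (PPar x R), (PPar y R);
    repeat split; try apply star_parL; auto; constructor; auto.
Qed.

Lemma wstep_commL P a M P1 R R1 :
  wstep lts P (LOut a M) P1 -> lts R (LIn a M) R1 -> star lts (PPar P R) (PPar P1 R1).
Proof.
  intros (p1 & p2 & H1 & H2 & H3) HR. eapply star_trans; [apply star_parL; eauto|].
  econstructor; [eapply lts_commL; eauto | apply star_parL; auto].
Qed.

Lemma wstep_commR P a M P1 R R1 :
  wstep lts P (LIn a M) P1 -> lts R (LOut a M) R1 -> star lts (PPar P R) (PPar P1 R1).
Proof.
  intros (p1 & p2 & H1 & H2 & H3) HR. eapply star_trans; [apply star_parL; eauto|].
  econstructor; [eapply lts_commR; eauto | apply star_parL; auto].
Qed.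

Definition hidden_output_bisim (S : proc -> proc -> Prop) : Prop :=
  weak_bisim lts S /\ forall X Y a M X', S X Y -> lts X (LOut a M) X' -> In a Hhid.

(* [par_ctx P Q X Y]: [P] and [Q] are [X] and [Y] in one and the same context
   [[] || R1 || ... || Rn] with hidden-free [Ri]. *)
Inductive par_ctx : proc -> proc -> proc -> proc -> Prop :=
  | par_ctx_hole X Y : par_ctx X Y X Y
  | par_ctx_par P Q X Y R : par_ctx P Q X Y -> hidden_free R -> par_ctx (PPar P R) (PPar Q R) X Y.

Lemma par_ctx_sym P Q X Y : par_ctx P Q X Y -> par_ctx Q P Y X.
Proof. induction 1; constructor; auto. Qed.

Definition ctx_label (l : label) : Prop :=
  l = LTau \/
  (exists a M, l = LIn a M /\ ~ In a Hhid /\ hidden_free M) \/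
  (exists a M, l = LOut a M /\ ~ In a Hhid).

Section ParClosure.
Variable S : proc -> proc -> Prop.
Hypothesis HS : hidden_output_bisim S.

Definition par_closure (P Q : proc) : Prop := exists X Y, S X Y /\ par_ctx P Q X Y.

Lemma par_closure_hole_step X Y l X' : S X Y -> lts X l X' -> ctx_label l ->
  exists Y', wstep lts Y l Y' /\ par_closure X' Y'.
Proof.
  intros HXY Hl Hc. destruct HS as [[_ Hsim] Hout].
  assert (Hr : tau_or_vis_input l).
  { destruct Hc as [-> | [(a & M & -> & Ha & _) | (a & M & -> & Ha)]]; [left; auto | right; eauto|].
    exfalso. apply Ha. eapply Hout; eauto. }
  destruct (Hsim _ _ _ _ HXY Hl Hr) as (Y' & ? & ?).
  exists Y'. split; auto. exists X', Y'. split; auto. constructor.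
Qed.

(* Outputs that reach the context carry hidden-free processes, so the context
   stays hidden-free when it receives them. *)
Lemma par_closure_step P Q X Y l P' : par_ctx P Q X Y -> S X Y -> lts P l P' -> ctx_label l ->
  exists Q', wstep lts Q l Q' /\ par_closure P' Q' /\ forall a M, l = LOut a M -> hidden_free M.
Proof.
  intros Hctx HXY. revert l P'.
  induction Hctx as [X Y | P Q X Y R Hctx IH HR]; intros l P' Hl Hc.
  - destruct (par_closure_hole_step _ _ _ _ HXY Hl Hc) as (Y' & ? & ?).
    exists Y'. repeat split; auto. intros a M ->. exfalso.
    destruct Hc as [E | [(? & ? & E & _) | (a' & M' & E & Ha)]]; try discriminate.
    injection E as <- <-. apply Ha. eapply (proj2 HS); eauto.
  - apply lts_par_inv in Hl as
      [(P1 & Hst & ->) | [(R1 & Hst & ->) | [(a & M & P1 & R1 & -> & Hs1 & Hs2 & ->)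
                                          | (a & M & P1 & R1 & -> & Hs1 & Hs2 & ->)]]].
    + destruct (IH HXY _ _ Hst Hc) as (Q' & Hw & (X' & Y' & HS' & Hct) & HM).
      exists (PPar Q' R). repeat split; auto using wstep_parL.
      exists X', Y'. split; auto. constructor; auto.
    + exists (PPar Q R1). split; [apply step_wstep; constructor; auto|]. split.
      * exists X, Y. split; auto. constructor; auto. eapply hidden_free_step; eauto.
        intros a M ->. destruct Hc as [E | [(a' & M' & E & _ & ?) | (? & ? & E & _)]];
          try discriminate. injection E as -> ->. auto.
      * intros a M ->. intros b Hb. apply HR. apply (proj2 (lts_fn _ _ _ Hst)); auto.
    + assert (Ha : ~ In a Hhid) by (apply HR; apply (proj2 (lts_fn _ _ _ Hs2))).
      destruct (IH HXY _ _ Hs1) as (Q' & Hw & (X' & Y' & HS' & Hct) & HM); [right; right; eauto|].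
      exists (PPar Q' R1). split; [eapply wstep_commL; eauto|].
      split; [| discriminate]. exists X', Y'. split; auto. constructor; auto.
      eapply hidden_free_step; eauto. intros ? ? E; injection E as <- <-. eauto.
    + pose proof (proj2 (lts_fn _ _ _ Hs2)) as [Ha HRM].
      assert (HM : hidden_free M) by (intros b Hb; apply HR; auto).
      destruct (IH HXY _ _ Hs1) as (Q' & Hw & (X' & Y' & HS' & Hct) & _); [right; left; eauto 6|].
      exists (PPar Q' R1). split; [eapply wstep_commR; eauto|].
      split; [| discriminate]. exists X', Y'. split; auto. constructor; auto.
      eapply hidden_free_step; eauto. discriminate.
Qed.

Lemma par_closure_barbed_bisim : barbed_bisimulation Hhid par_closure.
Proof.
  split; [| intros P Q (X & Y & HXY & Hct); repeat split].
  - intros P Q (X & Y & H1 & H2). exists Y, X. split.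
    + apply (proj1 (proj1 HS)); auto.
    + apply par_ctx_sym; auto.
  - intros [a | a] [Ha (M & P' & Hl)].
    + destruct (lts_in_any_arg _ _ _ _ PNil Hl) as [P'' Hl'].
      destruct (par_closure_step _ _ _ _ _ _ Hct HXY Hl') as (Q' & (q1 & q2 & Hq1 & Hq2 & _) & _);
        [right; left; exists a, PNil; repeat split; auto; intros b []|].
      exists q1. split; [apply taus_iff_star; auto | split; eauto].
    + destruct (par_closure_step _ _ _ _ _ _ Hct HXY Hl) as (Q' & (q1 & q2 & Hq1 & Hq2 & _) & _);
        [right; right; eauto|].
      exists q1. split; [apply taus_iff_star; auto | split; eauto].
  - intros R HR. exists X, Y. split; auto. constructor; auto.
  - intros P' Hl.
    destruct (par_closure_step _ _ _ _ _ _ Hct HXY Hl) as (Q' & Hw & HR & _); [left; auto|].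
    exists Q'. split; auto. apply taus_iff_star; auto.
Qed.

End ParClosure.

Lemma hidden_output_bisim_barbed_equiv S X Y :
  hidden_output_bisim S -> S X Y -> barbed_equiv Hhid X Y.
Proof.
  intros HS HXY. exists (par_closure S). split; [apply par_closure_barbed_bisim; auto|].
  exists X, Y. split; auto. constructor.
Qed.

(** * The administrative states of translated configurations *)

Notation KRec n := [POut Nk (tr_num n); Rec; POut Nrec Rec] (only parsing).
Notation LamBody t := (PIn Nhd (PIn Nb (rename lam_ren (tr_term t)))) (only parsing).
Notation RestartK := (PIn Nk (PPar (POut Nhd (PVar 0)) (PPar (POut Nk (PIn Nsuc (PVar 1)))
                       (PPar (POut Nc tr_nil) (POut Nb PNil))))) (only parsing).
Notation RecBody := (PIn Nrec (PPar (PVar 0) (PPar (POut Nrec (PVar 0)) Cont))) (only parsing).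
Notation ContHead := (PIn Nhd (PIn Nb (Choice (PVar 1)))) (only parsing).
Notation EnterBranch T := (PIn Nenter (PIn Nc (PPar T (POut Nc tr_nil)))) (only parsing).
Notation SkipBranch := (PIn Nskip (POut Ninit PNil)) (only parsing).
Notation ChoiceSel := (PIn Nch (PIn Nch (PVar 1))) (only parsing).
Notation DoneThread := (PIn Ndone PNil) (only parsing).

(* Every process reachable from a translated configuration is, up to
   permutation of its threads, [pstate_threads] of one of these states. *)
Inductive pstate : Type :=
  | SEv (t : term) (pi : stack) (n : nat)
  | SLam1 (t : term) (pi : stack) (n : nat)
  | SLamR (t : term) (n : nat)
  | SLamK (t : term) (n : nat)
  | SLamH (t : term) (n : nat)
  | SLamB (t : term) (n : nat)
  | SLamS (t s : term) (pi : stack) (n : nat)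
  | SInit (pi : stack) (n : nat)
  | SRec (pi : stack) (n : nat)
  | SCo (pi : stack) (n : nat)
  | SCo1 (pi : stack) (n : nat)
  | SDone1 (n : nat)
  | SDone2 (n : nat)
  | SCoB (t : term) (pi : stack) (n : nat)
  | SCh (t : term) (pi : stack) (n : nat)
  | SChA (t : term) (pi : stack) (n : nat)
  | SChB (t : term) (pi : stack) (n : nat)
  | SEnter (t : term) (pi : stack) (n : nat)
  | SEnter2 (t : term) (pi : stack) (n : nat)
  | SSkip (pi : stack) (n : nat).

Definition pstate_threads (a : pstate) : list proc :=
  match a with
  | SEv t pi n => tr_term t :: POut Nc (tr_stack pi) :: KRec n
  | SLam1 t pi n => threads (tr_stack pi) ++ POut Nb Restart :: LamBody t :: KRec n
  | SLamR t n => Restart :: LamBody t :: KRec n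
  | SLamK t n => RestartK :: LamBody t :: KRec n
  | SLamH t n => [POut Nhd (tr_num n); POut Nk (tr_num (S n)); POut Nc tr_nil; POut Nb PNil;
                  LamBody t; Rec; POut Nrec Rec]
  | SLamB t n => [PIn Nb (subst_rec 1 (tr_num n) (rename lam_ren (tr_term t))); POut Nb PNil;
                  POut Nk (tr_num (S n)); POut Nc tr_nil; Rec; POut Nrec Rec]
  | SLamS t s pi n => PIn Nb (subst_rec 1 (tr_term s) (rename lam_ren (tr_term t)))
                      :: POut Nc (tr_stack pi) :: POut Nb Restart :: KRec n
  | SInit pi n => POut Ninit PNil :: POut Nc (tr_stack pi) :: KRec n
  | SRec pi n => [RecBody; POut Nc (tr_stack pi); POut Nk (tr_num n); POut Nrec Rec]
  | SCo pi n => POut Nc (tr_stack pi) :: Cont :: KRec n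
  | SCo1 pi n => threads (tr_stack pi) ++ POut Nb DoneThread :: ContHead :: KRec n
  | SDone1 n => DoneThread :: ContHead :: KRec n
  | SDone2 n => ContHead :: KRec n
  | SCoB t pi n => PIn Nb (choice_plus (EnterBranch (tr_term t)) SkipBranch)
                   :: POut Nc (tr_stack pi) :: POut Nb DoneThread :: KRec n
  | SCh t pi n => POut Nch (EnterBranch (tr_term t)) :: POut Nch SkipBranch :: ChoiceSel
                  :: POut Nc (tr_stack pi) :: KRec n
  | SChA t pi n => PIn Nch (EnterBranch (tr_term t)) :: POut Nch SkipBranch
                   :: POut Nc (tr_stack pi) :: KRec n
  | SChB t pi n => PIn Nch SkipBranch :: POut Nch (EnterBranch (tr_term t))
                   :: POut Nc (tr_stack pi) :: KRec n
  | SEnter t pi n => EnterBranch (tr_term t) :: POut Nc (tr_stack pi) :: KRec n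
  | SEnter2 t pi n => PIn Nc (PPar (tr_term t) (POut Nc tr_nil)) :: POut Nc (tr_stack pi) :: KRec n
  | SSkip pi n => SkipBranch :: POut Nc (tr_stack pi) :: KRec n
  end.

Definition wf_pstate (a : pstate) : Prop :=
  match a with
  | SEv t pi _ => wf_term t /\ Forall wf_term pi
  | SLam1 t pi _ => wf_at 1 t /\ Forall wf_term pi
  | SLamR t _ | SLamK t _ | SLamH t _ | SLamB t _ => wf_at 1 t
  | SLamS t s pi _ => wf_at 1 t /\ wf_term s /\ Forall wf_term pi
  | SInit pi _ | SRec pi _ | SCo pi _ | SCo1 pi _ | SSkip pi _ => Forall wf_term pi
  | SDone1 _ | SDone2 _ => True
  | SCoB t pi _ | SCh t pi _ | SChA t pi _ | SChB t pi _ | SEnter t pi _ | SEnter2 t pi _ =>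
      wf_term t /\ Forall wf_term pi
  end.

Inductive pstep : pstate -> label -> pstate -> Prop :=
  | ps_app t1 t2 pi n : pstep (SEv (TApp t1 t2) pi n) LTau (SEv t1 (t2 :: pi) n)
  | ps_lam t pi n : pstep (SEv (TLam t) pi n) LTau (SLam1 t pi n)
  | ps_suc j pi n M : pstep (SEv (TFree (S j)) pi n) (LIn Nsuc M) (SEv (TFree j) pi n)
  | ps_z pi n M : pstep (SEv (TFree 0) pi n) (LIn Nz M) (SInit pi n)
  | ps_lam_nil t n : pstep (SLam1 t [] n) LTau (SLamR t n)
  | ps_lam_cons t s pi n : pstep (SLam1 t (s :: pi) n) LTau (SLamS t s pi n)
  | ps_restart t n M : pstep (SLamR t n) (LIn Nlam M) (SLamK t n)
  | ps_restart_k t n : pstep (SLamK t n) LTau (SLamH t n)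
  | ps_restart_hd t n : pstep (SLamH t n) LTau (SLamB t n)
  | ps_restart_b t n : pstep (SLamB t n) LTau (SEv (open t (TFree n)) [] (S n))
  | ps_beta t s pi n : pstep (SLamS t s pi n) LTau (SEv (open t s) pi n)
  | ps_init pi n : pstep (SInit pi n) LTau (SRec pi n)
  | ps_rec pi n : pstep (SRec pi n) LTau (SCo pi n)
  | ps_cont pi n : pstep (SCo pi n) LTau (SCo1 pi n)
  | ps_cont_nil n : pstep (SCo1 [] n) LTau (SDone1 n)
  | ps_cont_cons t pi n : pstep (SCo1 (t :: pi) n) LTau (SCoB t pi n)
  | ps_done n M : pstep (SDone1 n) (LIn Ndone M) (SDone2 n)
  | ps_choice t pi n : pstep (SCoB t pi n) LTau (SCh t pi n)
  | ps_sel_enter t pi n : pstep (SCh t pi n) LTau (SChA t pi n)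
  | ps_sel_skip t pi n : pstep (SCh t pi n) LTau (SChB t pi n)
  | ps_commit_enter t pi n : pstep (SChA t pi n) LTau (SEnter t pi n)
  | ps_commit_skip t pi n : pstep (SChB t pi n) LTau (SSkip pi n)
  | ps_enter t pi n M : pstep (SEnter t pi n) (LIn Nenter M) (SEnter2 t pi n)
  | ps_enter_c t pi n : pstep (SEnter2 t pi n) LTau (SEv t [] n)
  | ps_skip pi n M : pstep (SSkip pi n) (LIn Nskip M) (SInit pi n).

Lemma threads_tr_term t : threads (tr_term t) = [tr_term t].
Proof. destruct t as [[|]| | |]; reflexivity. Qed.

Lemma threads_tr_num n : threads (tr_num n) = [tr_num n].
Proof. destruct n; reflexivity. Qed.

Lemma closed_EnterBranch T : closed_at 0 T -> closed_at 0 (EnterBranch T).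
Proof. intros; simpl; repeat split; try lia. eapply closed_at_mono; eauto; lia. Qed.

Create HintDb closed.
#[local] Hint Resolve closed_tr_num closed_tr_term closed_tr_stack closed_tr_nil
  closed_EnterBranch closed_Restart : closed.

(* Computes the substitutions performed by the HOcore steps of a translated
   process; closedness makes all but the intended ones trivial. *)
Ltac simpl_subst := unfold subst; simpl;
  repeat (first [
    rewrite threads_tr_term | rewrite threads_tr_num |
    match goal with |- context [subst_rec 0 ?V (subst_rec 1 (tr_term ?s) (rename lam_ren (tr_term ?t)))] =>
      rewrite (tr_term_open t s V) by (auto with closed) end |
    match goal with |- context [subst_rec 0 ?V (subst_rec 1 (tr_num ?n) (rename lam_ren (tr_term ?t)))] =>
      rewrite (tr_term_open_num t n V) by (auto with closed) end |
    match goal with |- context [subst_rec (S (S ?k)) ?U (rename lam_ren (tr_term ?t))] =>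
      rewrite (subst_rec_lam_body t k U) by (auto with closed) end |
    match goal with |- context [lift ?k ?P] => rewrite (lift_closed P k) by (auto with closed) end |
    match goal with |- context [subst_rec ?k ?U ?P] =>
      rewrite (subst_rec_closed0 P k U) by (auto with closed) end
  ]; simpl).

Ltac pick_solve := (apply pick_here) + (apply pick_there; pick_solve).

Ltac perm_solve := simpl; repeat rewrite <- app_assoc; simpl;
  repeat match goal with
  | |- Permutation [] [] => apply perm_nil
  | |- Permutation (?A ++ _) (?A ++ _) => apply Permutation_app_head
  | |- Permutation (?x :: _) _ => eapply perm_cons_pick; [pick_solve|]
  end.

Ltac destruct_wf := repeat match goal with
  | H : _ /\ _ |- _ => destruct H
  | H : Forall _ (_ :: _) |- _ => inversion H; clear H; subst
  | H : wf_at _ (TApp _ _) |- _ => destruct H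
  end.

Ltac wf_solve := simpl; unfold wf_term, open in *; destruct_wf;
  repeat (first [split | apply Forall_cons | apply Forall_nil]); auto;
  try (apply wf_at_open_rec; unfold wf_term; simpl; auto).

Lemma pstep_wf a l a' : pstep a l a' -> wf_pstate a -> wf_pstate a'.
Proof. destruct 1; simpl; intros; wf_solve. Qed.

Ltac pstep_solve := (apply ps_sel_enter) + (apply ps_sel_skip) + econstructor.

Ltac threads_solve := simpl_subst; first [solve [auto with closed] | perm_solve].

Lemma pstate_comm_pstep a c M Q L1 L2 : wf_pstate a ->
  pick (POut c M) (pstate_threads a) L1 -> pick (PIn c Q) L1 L2 ->
  exists a', pstep a LTau a' /\ Permutation (threads (subst Q M) ++ L2) (pstate_threads a').
Proof.
  intros Hw H1 H2. destruct a; simpl in Hw; unfold wf_term in *.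
  all: match goal with
       | |- context [SEv ?t _ _] => destruct t as [[|]| | |]
       | |- context [SLam1 _ ?pi _] => destruct pi
       | |- context [SCo1 ?pi _] => destruct pi
       | _ => idtac end.
  all: simpl in H1, Hw; invert_picks; destruct_wf; try lia.
  all: solve [eexists; split; [pstep_solve | threads_solve]].
Qed.

Lemma pstate_out_hidden a c P L : pick (POut c P) (pstate_threads a) L -> In c Hhid.
Proof.
  intros Hp. destruct a; simpl in Hp;
    try destruct t as [[|]| | |]; try destruct pi; simpl in Hp; invert_picks; simpl; tauto.
Qed.

Lemma pstate_in_pstep a c Q L M : wf_pstate a ->
  pick (PIn c Q) (pstate_threads a) L -> ~ In c Hhid ->
  exists a', pstep a (LIn c M) a' /\ Permutation (threads (subst Q M) ++ L) (pstate_threads a').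
Proof.
  intros Hw Hp Hc. destruct a; simpl in Hw; unfold wf_term in *.
  all: match goal with
       | |- context [SEv ?t _ _] => destruct t as [[|]| | |]
       | |- context [SLam1 _ ?pi _] => destruct pi
       | |- context [SCo1 ?pi _] => destruct pi
       | _ => idtac end.
  all: simpl in Hp, Hw; invert_picks; destruct_wf; try lia;
    try (exfalso; apply Hc; simpl; tauto).
  all: solve [eexists; split; [econstructor | threads_solve]].
Qed.

Lemma pstep_tau_threads a a' : pstep a LTau a' -> wf_pstate a ->
  exists c M Q L1 L2, pick (POut c M) (pstate_threads a) L1 /\ pick (PIn c Q) L1 L2 /\
                      Permutation (threads (subst Q M) ++ L2) (pstate_threads a').
Proof.
  inversion 1; subst; simpl; unfold wf_term in *; intros; destruct_wf.
  all: solve [do 5 eexists; split; [pick_solve | split; [pick_solve | threads_solve]]].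
Qed.

Lemma pstep_in_threads a c M a' : pstep a (LIn c M) a' -> wf_pstate a ->
  exists Q L, pick (PIn c Q) (pstate_threads a) L /\
              Permutation (threads (subst Q M) ++ L) (pstate_threads a').
Proof.
  inversion 1; subst; simpl; unfold wf_term in *; intros; destruct_wf.
  all: solve [do 2 eexists; split; [pick_solve | threads_solve]].
Qed.

Lemma pstep_in_any_arg a c M a' M' : pstep a (LIn c M) a' -> pstep a (LIn c M') a'.
Proof. inversion 1; subst; constructor. Qed.

Definition represents (X : proc) (a : pstate) : Prop :=
  wf_pstate a /\ Permutation (threads X) (pstate_threads a).

Lemma represents_sim : weak_sim lts pstep represents.
Proof.
  intros X a l X' [Hw HP] Hl Hr. destruct l as [c M | c M |].
  - destruct Hr as [E | (c' & M' & E & Hc)]; [discriminate|]. injection E as <- <-.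
    destruct (lts_in_threads _ _ _ _ Hl) as (Q & L & H1 & H2).
    destruct (perm_pick _ _ _ _ HP H1) as (L' & H3 & H4).
    destruct (pstate_in_pstep _ _ _ _ M Hw H3 Hc) as (a' & Ha & HP').
    exists a'. split; [apply step_wstep; auto|]. split; [eapply pstep_wf; eauto|].
    rewrite H2, H4. auto.
  - destruct Hr as [E | (c' & M' & E & Hc)]; discriminate.
  - destruct (lts_tau_threads _ _ Hl) as (c & M & Q & L1 & L2 & H1 & H2 & H3).
    destruct (perm_pick _ _ _ _ HP H1) as (L1' & H4 & H5).
    destruct (perm_pick _ _ _ _ H5 H2) as (L2' & H6 & H7).
    destruct (pstate_comm_pstep _ _ _ _ _ _ Hw H4 H6) as (a' & Ha & HP').
    exists a'. split; [apply step_wstep; auto|]. split; [eapply pstep_wf; eauto|].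
    rewrite H3, H7. auto.
Qed.

Lemma represents_sim_rev : weak_sim pstep lts (fun a X => represents X a).
Proof.
  intros a X l a' [Hw HP] Ha _. symmetry in HP. destruct l as [c M | c M |].
  - destruct (pstep_in_threads _ _ _ _ Ha Hw) as (Q & L & H1 & H2).
    destruct (perm_pick _ _ _ _ HP H1) as (L' & H3 & H4).
    destruct (lts_of_pick_in _ _ _ _ M H3) as (X' & Hl & HX).
    exists X'. split; [apply step_wstep; auto|]. split; [eapply pstep_wf; eauto|].
    rewrite HX, <- H4. auto.
  - inversion Ha.
  - destruct (pstep_tau_threads _ _ Ha Hw) as (c & M & Q & L1 & L2 & H1 & H2 & H3).
    destruct (perm_pick _ _ _ _ HP H1) as (L1' & H4 & H5).
    destruct (perm_pick _ _ _ _ H5 H2) as (L2' & H6 & H7).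
    destruct (lts_of_pick_tau _ _ _ _ _ _ H4 H6) as (X' & Hl & HX).
    exists X'. split; [apply step_wstep; auto|]. split; [eapply pstep_wf; eauto|].
    rewrite HX, <- H7. auto.
Qed.

Lemma represents_out_hidden X a c M X' : represents X a -> lts X (LOut c M) X' -> In c Hhid.
Proof.
  intros [_ HP] Hl. destruct (lts_out_threads _ _ _ _ Hl) as (L & H1 & _).
  destruct (perm_pick _ _ _ _ HP H1) as (L' & H2 & _). eapply pstate_out_hidden; eauto.
Qed.

Definition pstate_of_conf (C : conf) : pstate :=
  match C with Ev t pi n => SEv t pi n | Co pi n => SCo pi n end.

Lemma represents_tr_conf C : wf_conf C -> represents (tr_conf C) (pstate_of_conf C).
Proof.
  destruct C; intros Hw; split; simpl in *; auto.
  all: rewrite ?threads_tr_term; perm_solve.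
Qed.

(** * The machine as a labelled transition system *)

(* Flags become inputs on the flag names.  A variable flag [f] is read digit
   by digit from [[f]] ([MNum]), and a choice first commits silently to
   [enter] ([MEnter]) or [skip] ([MSkip]). *)
Inductive mstate : Type :=
  | MConf (C : conf)
  | MNum (j : nat) (pi : stack) (n : nat)
  | MEnter (t : term) (n : nat)
  | MSkip (pi : stack) (n : nat)
  | MDone.

Definition mconf (C : conf) : mstate :=
  match C with
  | Ev (TFree f) pi n => MNum f pi n
  | _ => MConf C
  end.

Inductive mstep : mstate -> label -> mstate -> Prop :=
  | ms_app t s pi n : mstep (MConf (Ev (TApp t s) pi n)) LTau (mconf (Ev t (s :: pi) n))
  | ms_beta t s pi n : mstep (MConf (Ev (TLam t) (s :: pi) n)) LTau (mconf (Ev (open t s) pi n))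
  | ms_lam t n M :
      mstep (MConf (Ev (TLam t) [] n)) (LIn Nlam M) (mconf (Ev (open t (TFree n)) [] (S n)))
  | ms_suc j pi n M : mstep (MNum (S j) pi n) (LIn Nsuc M) (MNum j pi n)
  | ms_z pi n M : mstep (MNum 0 pi n) (LIn Nz M) (MConf (Co pi n))
  | ms_done n M : mstep (MConf (Co [] n)) (LIn Ndone M) MDone
  | ms_sel_enter t pi n : mstep (MConf (Co (t :: pi) n)) LTau (MEnter t n)
  | ms_sel_skip t pi n : mstep (MConf (Co (t :: pi) n)) LTau (MSkip pi n)
  | ms_enter t n M : mstep (MEnter t n) (LIn Nenter M) (mconf (Ev t [] n))
  | ms_skip pi n M : mstep (MSkip pi n) (LIn Nskip M) (MConf (Co pi n)).

Definition mstate_of_pstate (a : pstate) : mstate :=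
  match a with
  | SEv t pi n => mconf (Ev t pi n)
  | SLam1 t pi n => MConf (Ev (TLam t) pi n)
  | SLamR t n => MConf (Ev (TLam t) [] n)
  | SLamK t n | SLamH t n | SLamB t n => mconf (Ev (open t (TFree n)) [] (S n))
  | SLamS t s pi n => mconf (Ev (open t s) pi n)
  | SInit pi n | SRec pi n | SCo pi n | SCo1 pi n => MConf (Co pi n)
  | SDone1 n => MConf (Co [] n)
  | SDone2 n => MDone
  | SCoB t pi n | SCh t pi n => MConf (Co (t :: pi) n)
  | SChA t pi n | SEnter t pi n => MEnter t n
  | SEnter2 t pi n => mconf (Ev t [] n)
  | SChB _ pi n | SSkip pi n => MSkip pi n
  end.

Definition abstracts (a : pstate) (x : mstate) : Prop := wf_pstate a /\ x = mstate_of_pstate a.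

Lemma abstracts_sim : weak_sim pstep mstep abstracts.
Proof.
  intros a x l a' [Hw ->] Ha _. exists (mstate_of_pstate a').
  split; [| split; [eapply pstep_wf; eauto | auto]].
  destruct Ha; simpl;
    first [ apply star_refl
          | apply star_one; constructor
          | do 2 eexists; split; [apply star_refl | split; [constructor | apply star_refl]] ].
Qed.

Definition pstate_reflects (a : pstate) : Prop :=
  forall l x', mstep (mstate_of_pstate a) l x' -> tau_or_vis_input l ->
  exists a', wstep pstep a l a' /\ abstracts a' x'.

Lemma pstate_reflects_admin a a1 :
  pstep a LTau a1 -> mstate_of_pstate a1 = mstate_of_pstate a ->
  pstate_reflects a1 -> pstate_reflects a.
Proof.
  intros Ha E HP l x' Hx Hr. rewrite <- E in Hx.
  destruct (HP _ _ Hx Hr) as (a' & ? & ?).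
  exists a'. split; auto. eapply wstep_star_l; eauto. apply star_one; auto.
Qed.

Ltac pstar_solve := (apply star_refl) + (eapply star_step; [pstep_solve | pstar_solve]).

Ltac reflects_solve :=
  first [ eexists; split; [pstar_solve | split; [wf_solve | reflexivity]]
        | eexists; split; [do 2 eexists; split; [pstar_solve | split; [pstep_solve | pstar_solve]]
                          | split; [wf_solve | reflexivity]] ].

Lemma SEv_reflects t pi n : wf_pstate (SEv t pi n) -> pstate_reflects (SEv t pi n).
Proof.
  intros Hw l x' Hx Hr. simpl in Hw; unfold wf_term in *; destruct_wf.
  destruct t as [[|j]|i|t|t1 t2]; simpl in Hx; inversion Hx; subst; reflects_solve.
Qed.

Lemma pstate_reflects_all a : wf_pstate a -> pstate_reflects a.
Proof.
  intros Hw. destruct a; simpl in Hw; unfold wf_term in *; destruct_wf.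
  all: try solve [intros l x' Hx Hr; try destruct pi; simpl in Hx; inversion Hx; subst;
                  reflects_solve].
  all: repeat (eapply pstate_reflects_admin; [constructor | reflexivity |]).
  all: apply SEv_reflects; wf_solve.
Qed.

Lemma abstracts_sim_rev : weak_sim mstep pstep (fun x a => abstracts a x).
Proof. intros x a l x' [Hw ->] Hx Hr. apply pstate_reflects_all; auto. Qed.

Lemma abstracts_mconf C : wf_conf C -> abstracts (pstate_of_conf C) (mconf C).
Proof. destruct C; split; simpl in *; auto. Qed.

(** * Machine bisimilarity *)

Lemma mtau_det C C1 C2 : mtau C C1 -> mtau C C2 -> C1 = C2.
Proof. intros H1 H2. inversion H1; subst; inversion H2; subst; auto. Qed.

Lemma mflag_stuck C F C' D : mflag C F C' -> ~ mtau C D.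
Proof. intros H1 H2. inversion H1; subst; inversion H2. Qed.

Lemma mterm_stuck C F D : mterm C F -> ~ mtau C D.
Proof. intros H1 H2. inversion H1; subst; inversion H2. Qed.

Lemma mtaus_trans C1 C2 C3 : mtaus C1 C2 -> mtaus C2 C3 -> mtaus C1 C3.
Proof. induction 1; intros; auto. econstructor; eauto. Qed.

Lemma mtaus_to_stuck X Y Z : mtaus X Y -> mtaus X Z -> (forall W, ~ mtau Z W) -> mtaus Y Z.
Proof.
  intros H. revert Z. induction H as [|X X1 Y H1 H IH]; intros Z HZ Hst; auto.
  inversion HZ; subst.
  - exfalso. eapply Hst; eauto.
  - rewrite (mtau_det _ _ _ H1 H0) in *. auto.
Qed.

Lemma mtaus_from_stuck X Y : mtaus X Y -> (forall W, ~ mtau X W) -> Y = X.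
Proof. intros H Hst. inversion H; subst; auto. exfalso; eapply Hst; eauto. Qed.

Lemma mbisimilar_bisim : machine_bisimulation mbisimilar.
Proof.
  split.
  - intros C1 C2 (R & HR & H). exists R. split; auto. apply (proj1 HR); auto.
  - intros C1 C2 (R & HR & H) F. destruct (proj2 HR _ _ H F) as [H1 H2]. split; auto.
    intros C1m C1' Hm Hf. destruct (H1 _ _ Hm Hf) as (C2m & C2' & ? & ? & ?).
    exists C2m, C2'. repeat split; auto. exists R; auto.
Qed.

Lemma mbisimilar_sym C1 C2 : mbisimilar C1 C2 -> mbisimilar C2 C1.
Proof. apply (proj1 mbisimilar_bisim). Qed.

Lemma mbisimilar_mflag C1 C2 F C1' : mbisimilar C1 C2 -> mflag C1 F C1' ->
  exists C2m C2', mtaus C2 C2m /\ mflag C2m F C2' /\ mbisimilar C1' C2'.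
Proof. intros H Hf. eapply (proj2 mbisimilar_bisim _ _ H F); eauto. constructor. Qed.

Lemma mbisimilar_mterm C1 C2 F : mbisimilar C1 C2 -> mterm C1 F ->
  exists C2m, mtaus C2 C2m /\ mterm C2m F.
Proof. intros H Ht. eapply (proj2 mbisimilar_bisim _ _ H F); eauto. constructor. Qed.

(* Machine bisimulations are insensitive to silent prefixes because silent
   steps are deterministic and flagged configurations are stuck. *)
Lemma mbisimilar_mtaus C1 C2 C1' : mbisimilar C1 C2 -> mtaus C1 C1' -> mbisimilar C1' C2.
Proof.
  intros H Ht.
  exists (fun A B => exists A0 B0, mtaus A0 A /\ mtaus B0 B /\ mbisimilar A0 B0). split.
  2: { exists C1, C2. repeat split; auto. constructor. }
  split.
  - intros A B (A0 & B0 & H1 & H2 & H3). exists B0, A0. repeat split; auto.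
    apply mbisimilar_sym; auto.
  - intros A B (A0 & B0 & H1 & H2 & H3) F. destruct (proj2 mbisimilar_bisim _ _ H3 F) as [G1 G2].
    split.
    + intros Am A' H4 H5. destruct (G1 Am A') as (Bm & B' & H6 & H7 & H8);
        [eapply mtaus_trans; eauto | auto|].
      exists Bm, B'. split; [eapply mtaus_to_stuck; eauto; intros W; eapply mflag_stuck; eauto|].
      split; auto. exists A', B'. repeat split; auto; constructor.
    + intros Am H4 H5. destruct (G2 Am) as (Bm & H6 & H7); [eapply mtaus_trans; eauto | auto|].
      exists Bm. split; auto. eapply mtaus_to_stuck; eauto. intros W; eapply mterm_stuck; eauto.
Qed.

Lemma wf_mtau C C' : wf_conf C -> mtau C C' -> wf_conf C'.
Proof.
  intros Hw Ht. inversion Ht; subst; simpl in *; unfold wf_term in *; simpl in *.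
  - destruct Hw as [[? ?] ?]. split; auto.
  - destruct Hw as [? Hpi]. inversion Hpi; subst. split; auto. apply wf_open; auto.
Qed.

Lemma wf_mtaus C C' : wf_conf C -> mtaus C C' -> wf_conf C'.
Proof. intros Hw Ht. induction Ht; eauto using wf_mtau. Qed.

Lemma wf_mflag C F C' : wf_conf C -> mflag C F C' -> wf_conf C'.
Proof.
  intros Hw Hf. inversion Hf; subst; simpl in *; unfold wf_term in *; simpl in *; auto.
  - split; auto. apply wf_open; [apply Hw | exact I].
  - apply Hw.
  - inversion Hw; subst; auto.
  - inversion Hw; subst; auto.
Qed.

Lemma mtau_mstep C C' : mtau C C' -> mstep (mconf C) LTau (mconf C').
Proof. inversion 1; constructor. Qed.

Lemma mtaus_mstar C C' : mtaus C C' -> star mstep (mconf C) (mconf C').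
Proof. induction 1; [constructor|]. econstructor; eauto. apply mtau_mstep; auto. Qed.

(** * Soundness on [mstate] *)

Inductive mbisim_lift : mstate -> mstate -> Prop :=
  | lift_conf C1 C2 : mbisimilar C1 C2 -> wf_conf C1 -> wf_conf C2 ->
      mbisim_lift (mconf C1) (mconf C2)
  | lift_num j pi n pi' n' : mbisimilar (Co pi n) (Co pi' n') ->
      wf_conf (Co pi n) -> wf_conf (Co pi' n') -> mbisim_lift (MNum j pi n) (MNum j pi' n')
  | lift_enter t n t' n' : mbisimilar (Ev t [] n) (Ev t' [] n') ->
      wf_conf (Ev t [] n) -> wf_conf (Ev t' [] n') -> mbisim_lift (MEnter t n) (MEnter t' n')
  | lift_skip pi n pi' n' : mbisimilar (Co pi n) (Co pi' n') ->
      wf_conf (Co pi n) -> wf_conf (Co pi' n') -> mbisim_lift (MSkip pi n) (MSkip pi' n')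
  | lift_done : mbisim_lift MDone MDone.

Lemma wstep_after_mtaus C Cm c M y : mtaus C Cm -> mstep (mconf Cm) (LIn c M) y ->
  wstep mstep (mconf C) (LIn c M) y.
Proof. intros Ht Hs. exists (mconf Cm), y. repeat split; auto using mtaus_mstar; constructor. Qed.

Lemma star_after_mtaus C Cm y : mtaus C Cm -> mstep (mconf Cm) LTau y -> star mstep (mconf C) y.
Proof. intros Ht Hs. eapply star_trans; [apply mtaus_mstar; eauto | apply star_one; auto]. Qed.

Lemma mbisim_lift_mtau C1 C2 C1' : mbisimilar C1 C2 -> wf_conf C1 -> wf_conf C2 ->
  mtau C1 C1' -> mbisim_lift (mconf C1') (mconf C2).
Proof.
  intros H H1 H2 Ht. constructor; [| apply (wf_mtau C1) | ]; auto.
  apply (mbisimilar_mtaus _ _ _ H). econstructor; [exact Ht | constructor].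
Qed.

Lemma mbisim_lift_sim_mconf C1 C2 l x' : mbisimilar C1 C2 -> wf_conf C1 -> wf_conf C2 ->
  mstep (mconf C1) l x' -> exists y', wstep mstep (mconf C2) l y' /\ mbisim_lift x' y'.
Proof.
  intros H H1 H2 Hs.
  destruct C1 as [[f|i|t|t s] pi n|[|t pi] n]; simpl in Hs; inversion Hs; subst.
  - destruct (mbisimilar_mflag _ _ _ _ H (mflag_var (S j) pi n)) as (C2m & C2' & H3 & H4 & H5).
    inversion H4; subst. exists (MNum j pi0 n0).
    split; [eapply wstep_after_mtaus; eauto; constructor|].
    pose proof (wf_mtaus _ _ H2 H3). constructor; simpl in *; destruct_wf; auto.
  - destruct (mbisimilar_mflag _ _ _ _ H (mflag_var 0 pi n)) as (C2m & C2' & H3 & H4 & H5).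
    inversion H4; subst. exists (MConf (Co pi0 n0)).
    split; [eapply wstep_after_mtaus; eauto; constructor|].
    pose proof (wf_mtaus _ _ H2 H3). apply (lift_conf (Co pi n) (Co pi0 n0));
      simpl in *; destruct_wf; auto.
  - exists (mconf C2). split; [constructor|]. apply (mbisim_lift_mtau _ _ _ H H1 H2); constructor.
  - destruct (mbisimilar_mflag _ _ _ _ H (mflag_lam t n)) as (C2m & C2' & H3 & H4 & H5).
    inversion H4; subst. eexists. split; [eapply wstep_after_mtaus; eauto; constructor|].
    constructor; auto.
    + apply (wf_mflag _ _ _ H1 (mflag_lam t n)).
    + apply (wf_mflag _ _ _ (wf_mtaus _ _ H2 H3) H4).
  - exists (mconf C2). split; [constructor|]. apply (mbisim_lift_mtau _ _ _ H H1 H2); constructor.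
  - destruct (mbisimilar_mterm _ _ _ H (mterm_done n)) as (C2m & H3 & H4).
    inversion H4; subst. exists MDone. split; [eapply wstep_after_mtaus; eauto; constructor|].
    constructor.
  - destruct (mbisimilar_mflag _ _ _ _ H (mflag_enter t pi n)) as (C2m & C2' & H3 & H4 & H5).
    inversion H4; subst. exists (MEnter t0 n0).
    split; [eapply star_after_mtaus; eauto; constructor|].
    pose proof (wf_mtaus _ _ H2 H3). constructor; simpl in *; destruct_wf; auto.
  - destruct (mbisimilar_mflag _ _ _ _ H (mflag_skip t pi n)) as (C2m & C2' & H3 & H4 & H5).
    inversion H4; subst. exists (MSkip pi0 n0).
    split; [eapply star_after_mtaus; eauto; constructor|].
    pose proof (wf_mtaus _ _ H2 H3). constructor; simpl in *; destruct_wf; auto.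
Qed.

Lemma mbisim_lift_weak_bisim : weak_bisim mstep mbisim_lift.
Proof.
  split.
  - intros x y H. inversion H; subst; constructor; auto; apply mbisimilar_sym; auto.
  - intros x y l x' H Hs _. inversion H; subst.
    + eapply mbisim_lift_sim_mconf; eauto.
    + inversion Hs; subst.
      * exists (MNum j0 pi' n'). split; [apply step_wstep; constructor | constructor; auto].
      * exists (MConf (Co pi' n')). split; [apply step_wstep; constructor|].
        apply (lift_conf (Co pi n) (Co pi' n')); auto.
    + inversion Hs; subst. exists (mconf (Ev t' [] n')).
      split; [apply step_wstep; constructor | constructor; auto].
    + inversion Hs; subst. exists (MConf (Co pi' n')). split; [apply step_wstep; constructor|].
      apply (lift_conf (Co pi n) (Co pi' n')); auto.
    + inversion Hs.
Qed.

(** * Completeness on [mstate] *)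

Lemma mstar_from_stuck x z : star mstep x z -> (forall y, ~ mstep x LTau y) -> z = x.
Proof. intros Hs Hst. inversion Hs; subst; auto. exfalso; eapply Hst; eauto. Qed.

Lemma mstar_MEnter t n z : star mstep (MEnter t n) z -> z = MEnter t n.
Proof. intros Hs. apply (mstar_from_stuck _ _ Hs). intros y Hy; inversion Hy. Qed.

Lemma mstar_MSkip pi n z : star mstep (MSkip pi n) z -> z = MSkip pi n.
Proof. intros Hs. apply (mstar_from_stuck _ _ Hs). intros y Hy; inversion Hy. Qed.

Lemma mstep_mconf_tau_inv D y : mstep (mconf D) LTau y ->
  (exists D', mtau D D' /\ y = mconf D') \/
  (exists t pi n, D = Co (t :: pi) n /\ (y = MEnter t n \/ y = MSkip pi n)).
Proof.
  intros Hs. destruct D as [[f|i|t|t s] pi n|pi n]; simpl in Hs; inversion Hs; subst.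
  1, 2: left; eexists; split; [constructor | auto].
  all: right; eauto 6.
Qed.

Lemma mstep_mconf_in_inv D c M z : mstep (mconf D) (LIn c M) z ->
  (c = Nlam /\ exists t n, D = Ev (TLam t) [] n /\ z = mconf (Ev (open t (TFree n)) [] (S n))) \/
  (c = Nsuc /\ exists j pi n, D = Ev (TFree (S j)) pi n /\ z = MNum j pi n) \/
  (c = Nz /\ exists pi n, D = Ev (TFree 0) pi n /\ z = MConf (Co pi n)) \/
  (c = Ndone /\ exists n, D = Co [] n /\ z = MDone).
Proof.
  intros Hs. destruct D as [[f|i|t|t s] pi n|pi n]; simpl in Hs; inversion Hs; subst; eauto 10.
Qed.

Lemma mstar_mconf_inv D z : star mstep (mconf D) z ->
  (exists D', mtaus D D' /\ z = mconf D') \/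
  (exists t pi n, mtaus D (Co (t :: pi) n) /\ (z = MEnter t n \/ z = MSkip pi n)).
Proof.
  remember (mconf D) as x. intros Hs. revert D Heqx.
  induction Hs as [|x y z Hs1 Hs IH]; intros D ->.
  - left. exists D. split; [constructor | auto].
  - destruct (mstep_mconf_tau_inv _ _ Hs1) as [(D' & H1 & ->) | (t & pi & n & -> & [-> | ->])].
    + destruct (IH D' eq_refl) as [(D'' & ? & ?) | (t & pi & n & ? & ?)].
      * left. exists D''. split; auto. econstructor; eauto.
      * right. exists t, pi, n. split; auto. econstructor; eauto.
    + right. exists t, pi, n. split; [constructor|]. left. apply mstar_MEnter; auto.
    + right. exists t, pi, n. split; [constructor|]. right. apply mstar_MSkip; auto.
Qed.

Lemma mstar_mconf_in_inv D z1 c M z2 : star mstep (mconf D) z1 -> mstep z1 (LIn c M) z2 ->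
  c <> Nenter -> c <> Nskip -> exists D1, mtaus D D1 /\ mstep (mconf D1) (LIn c M) z2.
Proof.
  intros H1 H2 Hc1 Hc2.
  destruct (mstar_mconf_inv _ _ H1) as [(D1 & ? & ->) | (t & pi & n & _ & [-> | ->])]; eauto;
    inversion H2; subst; congruence.
Qed.

Lemma flag_input_vis c : In c [Nlam; Nsuc; Nz; Nenter; Nskip; Ndone] ->
  tau_or_vis_input (LIn c PNil).
Proof.
  intros Hc. right. exists c, PNil. split; auto. simpl in *; intuition subst; discriminate.
Qed.

Section Completeness.
Variable R : mstate -> mstate -> Prop.
Hypothesis HR : weak_bisim mstep R.

Lemma R_sym x y : R x y -> R y x.
Proof. apply (proj1 HR). Qed.

Lemma R_input x y c x' : R x y -> mstep x (LIn c PNil) x' ->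
  In c [Nlam; Nsuc; Nz; Nenter; Nskip; Ndone] ->
  exists y1 y2 y', star mstep y y1 /\ mstep y1 (LIn c PNil) y2 /\ star mstep y2 y' /\ R x' y'.
Proof.
  intros Hxy Hs Hc. destruct (proj2 HR _ _ _ _ Hxy Hs (flag_input_vis _ Hc))
    as (y' & (y1 & y2 & ? & ? & ?) & ?). exists y1, y2, y'. auto.
Qed.

(* A committed choice cannot be matched by a configuration: it must commit
   too, and then the two commitments disagree on [enter]/[skip]. *)
Lemma not_R_MEnter_mconf t n C : ~ R (MEnter t n) (mconf C).
Proof.
  intros H. destruct (R_input _ _ _ _ H (ms_enter t n PNil)) as (z1 & z2 & y & H1 & H2 & _);
    [simpl; tauto|].
  destruct (mstar_mconf_inv _ _ H1) as [(D & HD & ->) | (t1 & pi1 & n1 & HD & [-> | ->])].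
  - destruct (mstep_mconf_in_inv _ _ _ _ H2) as [[E _] | [[E _] | [[E _] | [E _]]]]; discriminate.
  - assert (Hs : star mstep (mconf C) (MSkip pi1 n1)) by (eapply star_after_mtaus; eauto; constructor).
    destruct (weak_sim_star _ _ _ (proj2 HR) _ _ _ (R_sym _ _ H) Hs) as (w & Hw & HRw).
    apply mstar_MEnter in Hw; subst.
    destruct (R_input _ _ _ _ HRw (ms_skip pi1 n1 PNil)) as (w1 & w2 & w & G1 & G2 & _);
      [simpl; tauto|].
    apply mstar_MEnter in G1; subst. inversion G2.
  - inversion H2.
Qed.

Lemma not_R_MSkip_mconf pi n C : ~ R (MSkip pi n) (mconf C).
Proof.
  intros H. destruct (R_input _ _ _ _ H (ms_skip pi n PNil)) as (z1 & z2 & y & H1 & H2 & _);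
    [simpl; tauto|].
  destruct (mstar_mconf_inv _ _ H1) as [(D & HD & ->) | (t1 & pi1 & n1 & HD & [-> | ->])].
  - destruct (mstep_mconf_in_inv _ _ _ _ H2) as [[E _] | [[E _] | [[E _] | [E _]]]]; discriminate.
  - inversion H2.
  - assert (Hs : star mstep (mconf C) (MEnter t1 n1)) by (eapply star_after_mtaus; eauto; constructor).
    destruct (weak_sim_star _ _ _ (proj2 HR) _ _ _ (R_sym _ _ H) Hs) as (w & Hw & HRw).
    apply mstar_MSkip in Hw; subst.
    destruct (R_input _ _ _ _ HRw (ms_enter t1 n1 PNil)) as (w1 & w2 & w & G1 & G2 & _);
      [simpl; tauto|].
    apply mstar_MSkip in G1; subst. inversion G2.
Qed.

Lemma R_mconf_mstar C D z : star mstep (mconf D) z -> R (mconf C) z ->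
  exists D', mtaus D D' /\ z = mconf D'.
Proof.
  intros H1 H2. destruct (mstar_mconf_inv _ _ H1) as [? | (t & pi & n & _ & [-> | ->])]; auto.
  - exfalso. eapply not_R_MEnter_mconf, R_sym; eauto.
  - exfalso. eapply not_R_MSkip_mconf, R_sym; eauto.
Qed.

Lemma R_MNum j pi n E : R (MNum j pi n) (mconf E) ->
  exists pi' n' E', mtaus E (Ev (TFree j) pi' n') /\ mtaus (Co pi' n') E' /\
                    R (mconf (Co pi n)) (mconf E').
Proof.
  revert pi n E; induction j as [|j IH]; intros pi n E H.
  - destruct (R_input _ _ _ _ H (ms_z pi n PNil)) as (z1 & z2 & y & H1 & H2 & H3 & HRy);
      [simpl; tauto|].
    destruct (mstar_mconf_in_inv _ _ _ _ _ H1 H2) as (D1 & HD1 & H4); try discriminate.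
    destruct (mstep_mconf_in_inv _ _ _ _ H4)
      as [[E1 _] | [[E1 _] | [(_ & pi' & n' & -> & ->) | [E1 _]]]]; try discriminate.
    destruct (R_mconf_mstar (Co pi n) (Co pi' n') _ H3 HRy) as (E' & HE' & ->).
    exists pi', n', E'. auto.
  - destruct (R_input _ _ _ _ H (ms_suc j pi n PNil)) as (z1 & z2 & y & H1 & H2 & H3 & HRy);
      [simpl; tauto|].
    destruct (mstar_mconf_in_inv _ _ _ _ _ H1 H2) as (D1 & HD1 & H4); try discriminate.
    destruct (mstep_mconf_in_inv _ _ _ _ H4)
      as [[E1 _] | [(_ & j' & pi' & n' & -> & ->) | [[E1 _] | [E1 _]]]]; try discriminate.
    destruct (R_mconf_mstar (Ev (TFree j) pi n) (Ev (TFree j') pi' n') _ H3 HRy)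
      as (E' & HE' & ->).
    apply mtaus_from_stuck in HE'; [subst | intros W HW; inversion HW].
    destruct (IH _ _ _ HRy) as (pi'' & n'' & E'' & G1 & G2 & G3).
    apply mtaus_from_stuck in G1; [injection G1 as -> -> -> | intros W HW; inversion HW].
    exists pi', n', E''. split; auto.
Qed.

Lemma R_mtaus D E C : R (mconf D) (mconf E) -> mtaus D C ->
  exists E', mtaus E E' /\ R (mconf C) (mconf E').
Proof.
  intros H Ht. destruct (weak_sim_star _ _ _ (proj2 HR) _ _ _ H (mtaus_mstar _ _ Ht)) as (w & Hw & HRw).
  destruct (R_mconf_mstar _ _ _ Hw HRw) as (E' & ? & ->). eauto.
Qed.

Definition mbisim_of (C1 C2 : conf) : Prop :=
  exists D1 D2, mtaus C1 D1 /\ mtaus C2 D2 /\ R (mconf D1) (mconf D2).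

Lemma mbisim_of_R_mtaus D E E' : mtaus E E' -> R (mconf D) (mconf E') -> mbisim_of D E.
Proof. intros. exists D, E'. repeat split; auto; constructor. Qed.

Lemma R_mflag_lam t n E : R (mconf (Ev (TLam t) [] n)) (mconf E) ->
  exists Em E', mtaus E Em /\ mflag Em FLam E' /\ mbisim_of (Ev (open t (TFree n)) [] (S n)) E'.
Proof.
  intros H. destruct (R_input _ _ _ _ H (ms_lam t n PNil)) as (z1 & z2 & y & H1 & H2 & H3 & HRy);
    [simpl; tauto|].
  destruct (mstar_mconf_in_inv _ _ _ _ _ H1 H2) as (E1 & HE1 & H4); try discriminate.
  destruct (mstep_mconf_in_inv _ _ _ _ H4)
    as [(_ & t' & n' & -> & ->) | [[E1' _] | [[E1' _] | [E1' _]]]]; try discriminate.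
  destruct (R_mconf_mstar _ _ _ H3 HRy) as (E2 & HE2 & ->).
  exists (Ev (TLam t') [] n'), (Ev (open t' (TFree n')) [] (S n')).
  repeat split; [auto | constructor | eapply mbisim_of_R_mtaus; eauto].
Qed.

Lemma R_mflag_var f pi n E : R (mconf (Ev (TFree f) pi n)) (mconf E) ->
  exists Em E', mtaus E Em /\ mflag Em (FVar f) E' /\ mbisim_of (Co pi n) E'.
Proof.
  intros H. destruct (R_MNum _ _ _ _ H) as (pi' & n' & E' & H1 & H2 & H3).
  exists (Ev (TFree f) pi' n'), (Co pi' n').
  repeat split; [auto | constructor | eapply mbisim_of_R_mtaus; eauto].
Qed.

Lemma R_mflag_enter t pi n E : R (mconf (Co (t :: pi) n)) (mconf E) ->
  exists Em E', mtaus E Em /\ mflag Em FEnter E' /\ mbisim_of (Ev t [] n) E'.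
Proof.
  intros H.
  assert (Hw : wstep mstep (mconf (Co (t :: pi) n)) (LIn Nenter PNil) (mconf (Ev t [] n))).
  { exists (MEnter t n), (mconf (Ev t [] n)).
    repeat split; [apply star_one; constructor | constructor | constructor]. }
  destruct (weak_sim_wstep _ _ _ (proj2 HR) _ _ _ _ H Hw (flag_input_vis Nenter ltac:(simpl; tauto)))
    as (y & (z1 & z2 & K1 & K2 & K3) & HRy).
  destruct (mstar_mconf_inv _ _ K1) as [(D & HD & ->) | (t1 & pi1 & n1 & HD & [-> | ->])].
  - destruct (mstep_mconf_in_inv _ _ _ _ K2) as [[E1 _] | [[E1 _] | [[E1 _] | [E1 _]]]];
      discriminate.
  - inversion K2; subst. destruct (R_mconf_mstar _ _ _ K3 HRy) as (E2 & HE2 & ->).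
    exists (Co (t1 :: pi1) n1), (Ev t1 [] n1).
    repeat split; [auto | constructor | eapply mbisim_of_R_mtaus; eauto].
  - inversion K2.
Qed.

Lemma R_mflag_skip t pi n E : R (mconf (Co (t :: pi) n)) (mconf E) ->
  exists Em E', mtaus E Em /\ mflag Em FSkip E' /\ mbisim_of (Co pi n) E'.
Proof.
  intros H.
  assert (Hw : wstep mstep (mconf (Co (t :: pi) n)) (LIn Nskip PNil) (mconf (Co pi n))).
  { exists (MSkip pi n), (mconf (Co pi n)).
    repeat split; [apply star_one; constructor | constructor | constructor]. }
  destruct (weak_sim_wstep _ _ _ (proj2 HR) _ _ _ _ H Hw (flag_input_vis Nskip ltac:(simpl; tauto)))
    as (y & (z1 & z2 & K1 & K2 & K3) & HRy).
  destruct (mstar_mconf_inv _ _ K1) as [(D & HD & ->) | (t1 & pi1 & n1 & HD & [-> | ->])].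
  - destruct (mstep_mconf_in_inv _ _ _ _ K2) as [[E1 _] | [[E1 _] | [[E1 _] | [E1 _]]]];
      discriminate.
  - inversion K2.
  - inversion K2; subst. destruct (R_mconf_mstar (Co pi n) (Co pi1 n1) _ K3 HRy) as (E2 & HE2 & ->).
    exists (Co (t1 :: pi1) n1), (Co pi1 n1).
    repeat split; [auto | constructor | eapply mbisim_of_R_mtaus; eauto].
Qed.

Lemma R_mflag D E F D' : R (mconf D) (mconf E) -> mflag D F D' ->
  exists Em E', mtaus E Em /\ mflag Em F E' /\ mbisim_of D' E'.
Proof.
  intros H Hf. revert H. destruct Hf.
  - apply R_mflag_lam.
  - apply R_mflag_var.
  - apply R_mflag_enter.
  - apply R_mflag_skip.
Qed.

Lemma R_mterm D E F : R (mconf D) (mconf E) -> mterm D F -> exists Em, mtaus E Em /\ mterm Em F.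
Proof.
  intros H Ht. revert H. destruct Ht. intros H.
  destruct (R_input _ _ _ _ H (ms_done n PNil)) as (z1 & z2 & y & K1 & K2 & _); [simpl; tauto|].
  destruct (mstar_mconf_in_inv _ _ _ _ _ K1 K2) as (E1 & HE1 & K4); try discriminate.
  destruct (mstep_mconf_in_inv _ _ _ _ K4)
    as [[E1' _] | [[E1' _] | [[E1' _] | (_ & n' & -> & ->)]]]; try discriminate.
  exists (Co [] n'). split; auto. constructor.
Qed.

Lemma mbisim_of_bisim : machine_bisimulation mbisim_of.
Proof.
  split.
  - intros C1 C2 (D1 & D2 & H1 & H2 & H3). exists D2, D1. repeat split; auto. apply R_sym; auto.
  - intros C1 C2 (D1 & D2 & H1 & H2 & H3) F. split.
    + intros C1m C1' G1 G2.
      assert (G3 : mtaus D1 C1m) by (eapply mtaus_to_stuck; eauto; intros W; eapply mflag_stuck; eauto).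
      destruct (R_mtaus _ _ _ H3 G3) as (E & HE & HRE).
      destruct (R_mflag _ _ _ _ HRE G2) as (Em & E' & ? & ? & ?).
      exists Em, E'. repeat split; auto. eauto using mtaus_trans.
    + intros C1m G1 G2.
      assert (G3 : mtaus D1 C1m) by (eapply mtaus_to_stuck; eauto; intros W; eapply mterm_stuck; eauto).
      destruct (R_mtaus _ _ _ H3 G3) as (E & HE & HRE).
      destruct (R_mterm _ _ _ HRE G2) as (Em & ? & ?).
      exists Em. split; auto. eauto using mtaus_trans.
Qed.

End Completeness.

Lemma weak_bisim_mbisimilar R C1 C2 : weak_bisim mstep R -> R (mconf C1) (mconf C2) ->
  mbisimilar C1 C2.
Proof.
  intros HR H. exists (mbisim_of R). split; [apply mbisim_of_bisim; auto|].
  exists C1, C2. repeat split; auto; constructor.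
Qed.

(** * Completeness on [pstate] *)

(* Testing an input on [c] with the context [[] || \bar c<0>] leaves a
   [0] thread behind; [pad k X] records [k] such leftovers. *)
Fixpoint pad (k : nat) (X : proc) : proc :=
  match k with 0 => X | S k' => PPar (pad k' X) PNil end.

Lemma lts_pad k X l X' : lts X l X' -> lts (pad k X) l (pad k X').
Proof. induction k; simpl; intros; auto. constructor; auto. Qed.

Lemma lts_pad_inv k X l Z : lts (pad k X) l Z -> exists X', lts X l X' /\ Z = pad k X'.
Proof.
  revert X l Z; induction k; simpl; intros X l Z Hl; eauto.
  apply lts_par_inv in Hl as
    [(P1 & Hst & ->) | [(R1 & Hst & _) | [(? & ? & ? & ? & _ & _ & Hst & _)
                                        | (? & ? & ? & ? & _ & _ & Hst & _)]]];
    try solve [inversion Hst].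
  destruct (IHk _ _ _ Hst) as (X' & ? & ->). eauto.
Qed.

Lemma star_pad k X X' : star lts X X' -> star lts (pad k X) (pad k X').
Proof. induction 1; [constructor|]. econstructor; [apply lts_pad; eauto | auto]. Qed.

Lemma star_pad_inv k X Z : star lts (pad k X) Z -> exists X', Z = pad k X' /\ star lts X X'.
Proof.
  remember (pad k X) as P. intros Hs. revert X HeqP.
  induction Hs as [|P P1 Z Hl Hs IH]; intros X ->.
  - exists X; split; auto; constructor.
  - destruct (lts_pad_inv _ _ _ _ Hl) as (X1 & H1 & ->).
    destruct (IH X1 eq_refl) as (X' & -> & H2). exists X'. split; auto. econstructor; eauto.
Qed.

Lemma star_pad_out_inv k c Y Q' : star lts (PPar (pad k Y) (POut c PNil)) Q' ->
  (exists Y', star lts Y Y' /\ Q' = PPar (pad k Y') (POut c PNil)) \/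
  (exists Y', wstep lts Y (LIn c PNil) Y' /\ Q' = pad (S k) Y').
Proof.
  remember (PPar (pad k Y) (POut c PNil)) as P. intros Hs. revert Y HeqP.
  induction Hs as [|P P0 Q' Hl Hs IH]; intros Y ->.
  - left. exists Y. split; auto. constructor.
  - apply lts_par_inv in Hl as
      [(P1 & Hst & ->) | [(R1 & Hst & ->) | [(a & M & P1 & R1 & E & Hs1 & Hs2 & ->)
                                          | (a & M & P1 & R1 & E & Hs1 & Hs2 & ->)]]].
    + destruct (lts_pad_inv _ _ _ _ Hst) as (Y1 & H1 & ->).
      destruct (IH Y1 eq_refl) as [(Y' & ? & ->) | (Y' & (Ya & Yb & ? & ? & ?) & ->)].
      * left. exists Y'. split; auto. econstructor; eauto.
      * right. exists Y'. split; auto. exists Ya, Yb. repeat split; auto. econstructor; eauto.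
    + inversion Hst.
    + inversion Hs2.
    + inversion Hs2; subst. destruct (lts_pad_inv _ _ _ _ Hs1) as (Y2 & H1 & ->).
      change (PPar (pad k Y2) PNil) with (pad (S k) Y2) in Hs.
      destruct (star_pad_inv _ _ _ Hs) as (Y' & -> & H2).
      right. exists Y'. split; auto. exists Y, Y2. repeat split; auto. constructor.
Qed.

Lemma barbed_bisim_star Rel P Q P' : barbed_bisimulation Hhid Rel -> Rel P Q -> star lts P P' ->
  exists Q', star lts Q Q' /\ Rel P' Q'.
Proof.
  intros HB HR Hs. revert Q HR. induction Hs as [|P P1 P' Hl Hs IH]; intros Q HR.
  - exists Q; split; auto; constructor.
  - destruct (proj2 (proj2 (proj2 HB _ _ HR)) _ Hl) as (Q1 & H1 & H2).
    destruct (IH _ H2) as (Q2 & ? & ?). exists Q2. split; auto.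
    eapply star_trans; [apply taus_iff_star; eauto | auto].
Qed.

Lemma barbed_pad_no_out_barb Rel k X a Q c : barbed_bisimulation Hhid Rel ->
  represents X a -> Rel (pad k X) Q -> ~ has_barb Hhid Q (BOut c).
Proof.
  intros HB HX HR Hb.
  destruct (proj1 (proj2 HB _ _ (proj1 HB _ _ HR)) _ Hb) as (Z & HZ & [Hc (M & Z' & Hl)]).
  apply taus_iff_star in HZ. destruct (star_pad_inv _ _ _ HZ) as (X' & -> & HX').
  destruct (lts_pad_inv _ _ _ _ Hl) as (X'' & Hl' & _).
  destruct (weak_sim_star _ _ _ represents_sim _ _ _ HX HX') as (a' & _ & Ha').
  apply Hc. eapply represents_out_hidden; eauto.
Qed.

Definition barbed_pstate (a b : pstate) : Prop :=
  exists X Y Rel k, represents X a /\ represents Y b /\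
                    barbed_bisimulation Hhid Rel /\ Rel (pad k X) (pad k Y).

Lemma barbed_pstate_input a b c M a' : barbed_pstate a b -> pstep a (LIn c M) a' -> ~ In c Hhid ->
  exists b', wstep pstep b (LIn c M) b' /\ barbed_pstate a' b'.
Proof.
  intros (X & Y & Rel & k & HX & HY & HB & HR) Ha Hc.
  assert (Hvis : tau_or_vis_input (LIn c PNil)) by (right; eauto).
  destruct (represents_sim_rev _ _ _ _ HX (pstep_in_any_arg _ _ _ _ PNil Ha) Hvis)
    as (X' & (X1 & X2 & HX1 & HX2 & HX3) & HX').
  assert (Hctx : Rel (PPar (pad k X) (POut c PNil)) (PPar (pad k Y) (POut c PNil))).
  { apply (proj1 (proj2 (proj2 HB _ _ HR))). intros d [<- | []]; auto. }
  assert (Hs : star lts (PPar (pad k X) (POut c PNil)) (pad (S k) X')).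
  { eapply star_trans; [apply star_parL, star_pad; eauto|].
    econstructor; [eapply lts_commR; [apply lts_pad; eauto | constructor]|].
    apply (star_pad (S k)); auto. }
  destruct (barbed_bisim_star _ _ _ _ HB Hctx Hs) as (Q' & HQ & HRQ).
  destruct (star_pad_out_inv _ _ _ _ HQ) as [(Y' & _ & ->) | (Y' & HY' & ->)].
  - exfalso. apply (barbed_pad_no_out_barb _ (S k) X' a' _ c HB HX' HRQ).
    split; auto. exists PNil, (PPar (pad k Y') PNil). apply lts_parR. constructor.
  - destruct (weak_sim_wstep _ _ _ represents_sim _ _ _ _ HY HY' Hvis)
      as (b' & (b1 & b2 & ? & Hb & ?) & HYb').
    exists b'. split; [exists b1, b2; repeat split; eauto using pstep_in_any_arg|].
    exists X', Y', Rel, (S k). auto.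
Qed.

Lemma barbed_pstate_weak_bisim : weak_bisim pstep barbed_pstate.
Proof.
  split.
  - intros a b (X & Y & Rel & k & H1 & H2 & H3 & H4).
    exists Y, X, Rel, k. do 3 (split; auto). apply (proj1 H3); auto.
  - intros a b l a' Hab Ha Hr. destruct Hr as [-> | (c & M & -> & Hc)].
    + destruct Hab as (X & Y & Rel & k & HX & HY & HB & HR).
      destruct (represents_sim_rev _ _ _ _ HX Ha (or_introl eq_refl)) as (X' & HwX & HX').
      destruct (barbed_bisim_star _ _ _ _ HB HR (star_pad k _ _ HwX)) as (Q' & HQ & HRQ).
      destruct (star_pad_inv _ _ _ HQ) as (Y' & -> & HY').
      destruct (weak_sim_star _ _ _ represents_sim _ _ _ HY HY') as (b' & Hb' & HYb').
      exists b'. split; auto. exists X', Y', Rel, k. auto.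
    + eapply barbed_pstate_input; eauto.
Qed.

Theorem theorem4p14 (C C' : conf) :
  wf_conf C -> wf_conf C' ->
  (mbisimilar C C' <-> barbed_equiv Hhid (tr_conf C) (tr_conf C')).
Proof.
  intros HC HC'. split.
  - intros Hm.
    set (Ra := fun a1 a2 => exists x1 x2, abstracts a1 x1 /\ abstracts a2 x2 /\ mbisim_lift x1 x2).
    set (Rp := fun X1 X2 => exists a1 a2, represents X1 a1 /\ represents X2 a2 /\ Ra a1 a2).
    assert (HRp : hidden_output_bisim Rp).
    { split.
      - apply (weak_bisim_transfer _ pstep); [exact represents_sim | exact represents_sim_rev|].
        apply (weak_bisim_transfer _ mstep); [exact abstracts_sim | exact abstracts_sim_rev|].
        exact mbisim_lift_weak_bisim.
      - intros X Y a M X' (a1 & _ & H1 & _) Hl. eapply represents_out_hidden; eauto. }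
    apply (hidden_output_bisim_barbed_equiv Rp); auto.
    exists (pstate_of_conf C), (pstate_of_conf C').
    split; [|split]; try apply represents_tr_conf; auto.
    exists (mconf C), (mconf C'). split; [|split]; try apply abstracts_mconf; auto.
    constructor; auto.
  - intros (Rel & HB & HR).
    apply (weak_bisim_mbisimilar (fun x1 x2 => exists a1 a2,
             abstracts a1 x1 /\ abstracts a2 x2 /\ barbed_pstate a1 a2)).
    + apply (weak_bisim_transfer _ pstep); [exact abstracts_sim_rev | exact abstracts_sim|].
      exact barbed_pstate_weak_bisim.
    + exists (pstate_of_conf C), (pstate_of_conf C').
      split; [|split]; try apply abstracts_mconf; auto.
      exists (tr_conf C), (tr_conf C'), Rel, 0.
      split; [|split]; try apply represents_tr_conf; auto.
Qed.
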